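(* Let $1<p<\infty$, let $a,b$ be as in the context, and let $w=(w_n)_{n\ge0}$ be a sequence of nonzero complex numbers such that $F_w$ is a bounded operator on $\ell^p_{a,b}$. Then: (i) If for every $\nu\ge0$ $$\liminf_{n\to\infty}\frac{|a_{\nu+n}|+|b_{\nu+n-1}|}{\prod_{k=0}^{n-1}|w_{\nu+k}|}=0,$$ then $F_w^*$ is hypercyclic on $(\ell^p_{a,b})^*$. (ii) If $F_w^*$ is hypercyclic on $(\ell^p_{a,b})^*$ and the constant function $1$ belongs to $\ell^p_{a,b}$, then $$\sup_{n\ge0}\frac{\prod_{k=0}^{n-1}|w_k|}{|a_n|}\Big(1+\sum_{j=1}^{\infty}\Big|\prod_{k=0}^{j-1}\frac{b_{n+k}}{a_{n+k+1}}\Big|^p\Big)^{1/p}=\infty.$$ (iii) $F_w^*$ is supercyclic on $(\ell^p_{a,b})^*$. (iv) If $\sup_{n\ge0}|w_na_n/a_{n+1}|<\infty$ and $\limsup_{n\to\infty}|b_n/a_{n+1}|<1$, then $F_w^*$ is hypercyclic on $(\ell^p_{a,b})^*$ if and only if $$\liminf_{n\to\infty}\Big|\frac{a_{\nu+n}}{\prod_{k=0}^{n-1}w_{\nu+k}}\Big|=0\quad\text{for all }\nu\ge0.$$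
   Context: Let $a=(a_n)_{n\ge0}$, $b=(b_n)_{n\ge0}$ be sequences of nonzero complex numbers with $\limsup_{n\to\infty}(|a_n|+|b_n|)^{1/n}<\infty$, and let $R=1/\limsup_{n}(|a_n|+|b_n|)^{1/n}\in(0,\infty]$. For $n\ge0$ let $f_n(z)=(a_n+b_nz)z^n$. For $1\le p<\infty$, $\ell^p_{a,b}$ is the space of analytic functions on $\{|z|<R\}$ of the form $f=\sum_{n\ge0}\lambda_nf_n$ with $(\lambda_n)\in\ell^p(\mathbb{N}_0)$ (the series converges locally uniformly on $\{|z|<R\}$ and the $\lambda_n$ are uniquely determined by $f$), normed by $\|f\|=(\sum_n|\lambda_n|^p)^{1/p}$; thus $\{f_n\}$ is a normalized Schauder basis equivalent to the standard basis of $\ell^p(\mathbb{N}_0)$. For a sequence $w=(w_n)_{n\ge0}$, the weighted forward shift is $F_w\big(\sum_{n\ge0}\mu_nz^n\big)=\sum_{n\ge0}\mu_nw_nz^{n+1}$ (acting on power series); ''bounded on $X$'' means $F_w$ maps $X$ into $X$ and is a bounded operator; $F_w^*$ is its Banach space adjoint. An operator $T$ on a separable Banach space $Y$ is hypercyclic if some orbit $\{T^nx:n\ge0\}$ is dense in $Y$, and supercyclic if for some $x$ the set $\{cT^nx:c\in\mathbb{C},n\ge0\}$ is dense in $Y$. Empty products equal $1$. *)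

From Stdlib Require Import Reals.
From Coquelicot Require Import Coquelicot.
Open Scope R_scope.

(* |x|^y for x >= 0, with the convention 0^y = 0 (y > 0). *)
Definition rpowp (x y : R) : R :=
  if Req_EM_T x 0 then 0 else Rpower x y.

Fixpoint prodR (f : nat -> R) (n : nat) : R :=
  match n with O => 1 | S m => prodR f m * f m end.
Fixpoint prodC (f : nat -> C) (n : nat) : C :=
  match n with O => RtoC 1 | S m => Cmult (prodC f m) (f m) end.

Definition in_lp (p : R) (lam : nat -> C) : Prop :=
  ex_series (fun n => rpowp (Cmod (lam n)) p).
Definition lpnorm (p : R) (lam : nat -> C) : R :=
  rpowp (Series (fun n => rpowp (Cmod (lam n)) p)) (/ p).

(* Elements of l^p_{a,b} are represented by their Taylor coefficient
   sequences mu (f = sum_n mu_n z^n).  The Taylor coefficients of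
   sum_n lam_n (a_n + b_n z) z^n are: *)
Definition taylor (a b lam : nat -> C) (m : nat) : C :=
  match m with
  | O => Cmult (a O) (lam O)
  | S k => Cplus (Cmult (a (S k)) (lam (S k))) (Cmult (b k) (lam k))
  end.

(* The (unique, since a_n <> 0) coefficient sequence lam with taylor lam = mu *)
Fixpoint coefinv (a b mu : nat -> C) (m : nat) : C :=
  match m with
  | O => Cdiv (mu O) (a O)
  | S k => Cdiv (Cminus (mu (S k)) (Cmult (b k) (coefinv a b mu k))) (a (S k))
  end.

Definition inX (p : R) (a b : nat -> C) (mu : nat -> C) : Prop :=
  exists lam, in_lp p lam /\ forall m, mu m = taylor a b lam m.

Definition normX (p : R) (a b : nat -> C) (mu : nat -> C) : R :=
  lpnorm p (coefinv a b mu).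

Definition Fw (w : nat -> C) (mu : nat -> C) (n : nat) : C :=
  match n with O => RtoC 0 | S k => Cmult (w k) (mu k) end.

Definition Fw_bounded (p : R) (a b w : nat -> C) : Prop :=
  (forall mu, inX p a b mu -> inX p a b (Fw w mu)) /\
  exists C0 : R, forall mu, inX p a b mu -> normX p a b (Fw w mu) <= C0 * normX p a b mu.

(* elements of the dual space: bounded linear functionals on l^p_{a,b}
   (functionals are only considered on inX) *)
Definition in_dual (p : R) (a b : nat -> C) (phi : (nat -> C) -> C) : Prop :=
  (forall x y, inX p a b x -> inX p a b y ->
     phi (fun n => Cplus (x n) (y n)) = Cplus (phi x) (phi y)) /\
  (forall (c : C) x, inX p a b x -> phi (fun n => Cmult c (x n)) = Cmult c (phi x)) /\
  exists C0 : R, forall x, inX p a b x -> Cmod (phi x) <= C0 * normX p a b x.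

Definition dual_close (p : R) (a b : nat -> C) (chi psi : (nat -> C) -> C) (eps : R) : Prop :=
  exists delta, delta < eps /\
    forall x, inX p a b x -> Cmod (Cminus (chi x) (psi x)) <= delta * normX p a b x.

Definition Fw_adj (w : nat -> C) (phi : (nat -> C) -> C) : (nat -> C) -> C :=
  fun x => phi (Fw w x).

Definition adj_hypercyclic (p : R) (a b w : nat -> C) : Prop :=
  exists phi, in_dual p a b phi /\
    forall psi, in_dual p a b psi -> forall eps, 0 < eps ->
      exists n : nat, dual_close p a b (Nat.iter n (Fw_adj w) phi) psi eps.

Definition adj_supercyclic (p : R) (a b w : nat -> C) : Prop :=
  exists phi, in_dual p a b phi /\
    forall psi, in_dual p a b psi -> forall eps, 0 < eps ->
      exists (c : C) (n : nat),
        dual_close p a b (fun x => Cmult c (Nat.iter n (Fw_adj w) phi x)) psi eps.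

Definition const_one : nat -> C := fun n => match n with O => RtoC 1 | _ => RtoC 0 end.

From Stdlib Require Import Reals.
From Coquelicot Require Import Coquelicot.
From Stdlib Require Import Lra Lia ZArith FunctionalExtensionality Classical IndefiniteDescription Cantor.
Open Scope R_scope.

(* Write G for the adjoint F_w^* .  Through the coefficient map, ℓ^p_{a,b} is isometric to ℓ^p,
   and its m-th Taylor coefficient is a functional of norm at most |a_m| + |b_(m-1)|.  Every
   bounded functional ψ is small on the tails {λ_0 = ... = λ_(N-1) = 0}: otherwise, for every K,
   there are K disjointly supported unit blocks on which ψ exceeds ε, and their sum has norm
   K^(1/p) = o(K) because p > 1.  Hence the finite Gaussian-rational combinations t_k of Taylor
   coefficients are dense in the dual.  As G^n maps Σ c_m μ_(m+n) / (w_m ... w_(m+n-1)) to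
   Σ c_m μ_m, the target t_k has a preimage under G^n of norm controlled by
   Q(M) = (|a_M| + |b_(M-1)|) / |w_0 ... w_(M-1)| at M = n + length(t_k).  With n_k growing and
   r_k decreasing fast enough, φ = Σ r_k G^(-n_k) t_k is bounded and r_k^(-1) G^(n_k) φ is within
   4·2^(-k) of t_k: this gives supercyclicity, and hypercyclicity (r_k = 1) when liminf Q = 0.
   Conversely, a hypercyclic G forces ‖F_w^n x‖ to be unbounded for every x ≠ 0 (compare the
   orbit with the functional μ ↦ c μ_ν), and ‖F_w^n e_ν‖ is computed explicitly. *)

Lemma rpowp_0 y : rpowp 0 y = 0.
Proof. unfold rpowp; destruct (Req_EM_T 0 0); lra. Qed.
Lemma rpowp_pos x y : 0 < x -> rpowp x y = Rpower x y.
Proof. intros; unfold rpowp; destruct (Req_EM_T x 0); [lra|auto]. Qed.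
Lemma rpowp_ge0 x y : 0 <= rpowp x y.
Proof. unfold rpowp; destruct (Req_EM_T x 0); [lra|]. unfold Rpower; left; apply exp_pos. Qed.
Lemma rpowp_gt0 x y : 0 < x -> 0 < rpowp x y.
Proof. intros; rewrite rpowp_pos; auto. unfold Rpower; apply exp_pos. Qed.
Lemma rpowp_1 y : rpowp 1 y = 1.
Proof. rewrite rpowp_pos by lra. unfold Rpower; rewrite ln_1, Rmult_0_r, exp_0; auto. Qed.
Lemma rpowp_mult x y z : 0 <= x -> 0 <= y -> rpowp (x*y) z = rpowp x z * rpowp y z.
Proof.
  intros Hx Hy. destruct (Req_dec x 0) as [->|]. rewrite Rmult_0_l, !rpowp_0; ring.
  destruct (Req_dec y 0) as [->|]. rewrite Rmult_0_r, !rpowp_0; ring.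
  rewrite !rpowp_pos; try nra. rewrite Rpower_mult_distr; auto; lra.
Qed.
Lemma rpowp_rpowp_inv x q : 0 < q -> 0 <= x -> rpowp (rpowp x q) (/q) = x.
Proof.
  intros Hq Hx. destruct (Req_dec x 0) as [->|]. rewrite !rpowp_0; auto.
  rewrite (rpowp_pos x) by lra. rewrite rpowp_pos.
  rewrite Rpower_mult, Rinv_r, Rpower_1; lra.
  unfold Rpower; apply exp_pos.
Qed.
Lemma rpowp_inv_rpowp x q : 0 < q -> 0 <= x -> rpowp (rpowp x (/q)) q = x.
Proof.
  intros Hq Hx. pattern q at 2; replace q with (/ / q) by (field; lra).
  apply rpowp_rpowp_inv; auto. apply Rinv_0_lt_compat; auto.
Qed.
Lemma rpowp_le x y z : 0 <= z -> 0 <= x <= y -> rpowp x z <= rpowp y z.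
Proof.
  intros Hz [Hx Hxy]. destruct (Req_dec x 0) as [->|]. rewrite rpowp_0; apply rpowp_ge0.
  rewrite !rpowp_pos by lra. apply Rle_Rpower_l; lra.
Qed.
Lemma rpowp_lt x y z : 0 < z -> 0 <= x < y -> rpowp x z < rpowp y z.
Proof.
  intros Hz [Hx Hxy]. destruct (Req_dec x 0) as [->|]. rewrite rpowp_0; apply rpowp_gt0; lra.
  rewrite !rpowp_pos by lra. apply Rlt_Rpower_l; lra.
Qed.

Lemma is_series_fin (f : nat -> R) M : (forall n, (M <= n)%nat -> f n = 0) -> is_series f (sum_n f M).
Proof.
  intros H. change (is_lim_seq (sum_n f) (sum_n f M)).
  apply is_lim_seq_ext_loc with (fun _ => sum_n f M); [|apply is_lim_seq_const].
  exists M. intros n Hn. induction Hn. auto. rewrite sum_Sn, H by lia. rewrite IHHn. symmetry; apply Rplus_0_r.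
Qed.
Lemma ex_series_fin (f : nat -> R) M : (forall n, (M <= n)%nat -> f n = 0) -> ex_series f.
Proof. intros H; eexists; apply (is_series_fin f M H). Qed.
Lemma Series_zero (f : nat -> R) : (forall n, f n = 0) -> Series f = 0.
Proof. intros H. rewrite (Series_ext _ (fun n => 0 * 1)). rewrite Series_scal_l. ring. intros; rewrite H; ring. Qed.
Lemma Series_ge0 f : (forall n, 0 <= f n) -> ex_series f -> 0 <= Series f.
Proof. intros H Hf. rewrite <- (Series_zero (fun _ => 0)) by auto. apply Series_le; auto. intros; split; [lra|auto]. Qed.
Lemma sum_f_R0_ge_term f m k : (forall n, 0 <= f n) -> (k <= m)%nat -> f k <= sum_f_R0 f m.
Proof.
  intros H Hk. induction m. replace k with 0%nat by lia. simpl; lra.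
  simpl. destruct (Nat.eq_dec k (S m)) as [->|]. pose proof (cond_pos_sum f m). assert (0 <= sum_f_R0 f m).
  { clear -H. induction m; simpl; auto. specialize (H (S m)); lra. } lra.
  specialize (IHm ltac:(lia)). specialize (H (S m)); lra.
Qed.
Lemma Series_ge_term f m : (forall n, 0 <= f n) -> ex_series f -> f m <= Series f.
Proof.
  intros H Hf. rewrite (Series_incr_n f (S m)) by (auto; lia). simpl pred.
  pose proof (sum_f_R0_ge_term f m m H (le_n _)).
  assert (0 <= Series (fun k => f (S m + k)%nat)). apply Series_ge0; auto. apply (ex_series_incr_n f (S m)); auto.
  lra.
Qed.
Lemma Series_single (r : R) m : Series (fun n => if Nat.eqb n m then r else 0) = r.
Proof.
  apply is_series_unique. set (g := fun n => if Nat.eqb n m then r else 0).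
  assert (E : sum_n g (S m) = r).
  { rewrite sum_Sn. unfold g at 2. destruct (Nat.eqb_spec (S m) m); [lia|].
  assert (forall k, (k <= m)%nat -> sum_n g k = if Nat.eqb k m then r else 0).
  { induction k; intros. rewrite sum_O; auto. rewrite sum_Sn, IHk by lia. unfold g.
    destruct (Nat.eqb_spec k m); [lia|]. destruct (Nat.eqb_spec (S k) m); simpl; unfold plus; simpl; ring. }
  rewrite H by lia. rewrite Nat.eqb_refl. unfold plus; simpl; ring. }
  rewrite <- E. apply is_series_fin. intros n Hn. unfold g. destruct (Nat.eqb_spec n m); [lia|auto].
Qed.

Definition Fw_iter (w : nat -> C) (n : nat) (x : nat -> C) : nat -> C := Nat.iter n (Fw w) x.
Definition coord_const (a b : nat -> C) (m : nat) : R := Cmod (a m) + Cmod (b (m - 1)%nat).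

Lemma coord_const_ge0 a b m : 0 <= coord_const a b m.
Proof. unfold coord_const; pose proof (Cmod_ge_0 (a m)); pose proof (Cmod_ge_0 (b (m-1)%nat)); lra. Qed.

Lemma Fw_iter_S w n x : Fw_iter w (S n) x = Fw w (Fw_iter w n x).
Proof. reflexivity. Qed.
Lemma Fw_iter_low w n x i : (i < n)%nat -> Fw_iter w n x i = RtoC 0.
Proof.
  revert i; induction n; intros i Hi. lia. rewrite Fw_iter_S. destruct i; simpl; auto.
  rewrite IHn by lia. apply Cmult_0_r.
Qed.
Lemma Fw_iter_high w n x i : Fw_iter w n x (i + n)%nat = Cmult (prodC (fun k => w (i + k)%nat) n) (x i).
Proof.
  induction n. simpl. rewrite Nat.add_0_r. ring.
  rewrite Fw_iter_S. replace (i + S n)%nat with (S (i + n)) by lia. simpl. rewrite IHn. ring.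
Qed.

Lemma Cmod_prodC f n : Cmod (prodC f n) = prodR (fun k => Cmod (f k)) n.
Proof. induction n; simpl. apply Cmod_1. rewrite Cmod_mult, IHn; auto. Qed.
Lemma prodR_ge0 f n : (forall k, 0 <= f k) -> 0 <= prodR f n.
Proof. intros H; induction n; simpl; [lra|]. apply Rmult_le_pos; auto. Qed.
Lemma prodR_gt0 f n : (forall k, 0 < f k) -> 0 < prodR f n.
Proof. intros H; induction n; simpl; [lra|]. apply Rmult_lt_0_compat; auto. Qed.
Lemma prodC_neq0 f n : (forall k, f k <> RtoC 0) -> prodC f n <> RtoC 0.
Proof.
  intros H E. assert (Hm : 0 < Cmod (prodC f n)) by (rewrite Cmod_prodC; apply prodR_gt0; intros; apply Cmod_gt_0, H).
  rewrite E, Cmod_0 in Hm. lra.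
Qed.

Section SequenceSpace.
Context (p : R) (a b : nat -> C).
Context (Hp : 1 < p) (Ha : forall n, a n <> RtoC 0).

Lemma coefinv_taylor lam : coefinv a b (taylor a b lam) = lam.
Proof.
  apply functional_extensionality; intro m. induction m; simpl.
  field; auto. rewrite IHm. field; auto.
Qed.

Lemma inX_coefinv x : inX p a b x -> in_lp p (coefinv a b x) /\ x = taylor a b (coefinv a b x).
Proof.
  intros [lam [Hl Hx]]. assert (E : x = taylor a b lam) by (apply functional_extensionality; auto).
  subst x. rewrite coefinv_taylor; auto.
Qed.
Lemma taylor_inX lam : in_lp p lam -> inX p a b (taylor a b lam).
Proof. intros H; exists lam; split; auto. Qed.
Lemma normX_taylor lam : normX p a b (taylor a b lam) = lpnorm p lam.
Proof. unfold normX; rewrite coefinv_taylor; auto. Qed.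
Lemma lpnorm_ge0 lam : 0 <= lpnorm p lam.
Proof. apply rpowp_ge0. Qed.
Lemma normX_ge0 x : 0 <= normX p a b x.
Proof. apply rpowp_ge0. Qed.
Lemma coef_le_lpnorm lam m : in_lp p lam -> Cmod (lam m) <= lpnorm p lam.
Proof.
  intros H. unfold lpnorm. rewrite <- (rpowp_rpowp_inv (Cmod (lam m)) p) by (auto using Cmod_ge_0; lra).
  apply rpowp_le. left; apply Rinv_0_lt_compat; lra. split. apply rpowp_ge0.
  apply Series_ge_term with (f := fun n => rpowp (Cmod (lam n)) p); auto. intros; apply rpowp_ge0.
Qed.
Lemma coord_bound x m : inX p a b x -> Cmod (x m) <= coord_const a b m * normX p a b x.
Proof.
  intros H. destruct (inX_coefinv x H) as [Hl E].
  replace (x m) with (taylor a b (coefinv a b x) m) by (rewrite <- E; auto).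
  unfold normX, coord_const. set (lam := coefinv a b x).
  pose proof (coef_le_lpnorm _ m Hl). pose proof (lpnorm_ge0 lam).
  pose proof (Cmod_ge_0 (a m)). pose proof (Cmod_ge_0 (b (m - 1)%nat)).
  destruct m as [|m]; simpl.
  - rewrite Cmod_mult. apply Rle_trans with (Cmod (a 0%nat) * lpnorm p lam).
    apply Rmult_le_compat_l; auto. simpl in *. nra.
  - pose proof (coef_le_lpnorm _ m Hl). pose proof (Cmod_ge_0 (b m)).
    eapply Rle_trans. apply Cmod_triangle. rewrite !Cmod_mult, Rmult_plus_distr_r, Nat.sub_0_r.
    apply Rplus_le_compat; apply Rmult_le_compat_l; auto.
Qed.
End SequenceSpace.

Fixpoint csum (f : nat -> C) (n : nat) : C :=
  match n with O => RtoC 0 | S m => Cplus (csum f m) (f m) end.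
Fixpoint rsum (f : nat -> R) (n : nat) : R :=
  match n with O => 0 | S m => rsum f m + f m end.
Definition fin_form (N : nat) (d : nat -> C) (x : nat -> C) : C := csum (fun i => Cmult (d i) (x i)) N.

Lemma Cmod_csum f n : Cmod (csum f n) <= rsum (fun i => Cmod (f i)) n.
Proof. induction n; simpl. rewrite Cmod_0; lra. eapply Rle_trans. apply Cmod_triangle. lra. Qed.
Lemma rsum_ge0 f n : (forall i, 0 <= f i) -> 0 <= rsum f n.
Proof. intros H; induction n; simpl; [lra|]. specialize (H n); lra. Qed.
Lemma rsum_le f g n : (forall i, (i < n)%nat -> f i <= g i) -> rsum f n <= rsum g n.
Proof. intros H; induction n; simpl; [lra|]. pose proof (H n ltac:(lia)). pose proof (IHn ltac:(intros; apply H; lia)). lra. Qed.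
Lemma rsum_scal c f n : rsum (fun i => c * f i) n = c * rsum f n.
Proof. induction n; simpl; [ring|]. rewrite IHn; ring. Qed.
Lemma csum_ext f g n : (forall i, (i < n)%nat -> f i = g i) -> csum f n = csum g n.
Proof. intros H; induction n; simpl; auto. rewrite IHn, H by (auto; lia). auto. Qed.
Lemma csum_plus f g n : csum (fun i => Cplus (f i) (g i)) n = Cplus (csum f n) (csum g n).
Proof. induction n; simpl. ring. rewrite IHn; ring. Qed.
Lemma csum_scal c f n : csum (fun i => Cmult c (f i)) n = Cmult c (csum f n).
Proof. induction n; simpl. ring. rewrite IHn; ring. Qed.

Lemma fin_form_S N d x : fin_form (S N) d x = Cplus (fin_form N d x) (Cmult (d N) (x N)).
Proof. reflexivity. Qed.
Lemma fin_form_ext N d d' x : (forall i, (i < N)%nat -> d i = d' i) -> fin_form N d x = fin_form N d' x.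
Proof. intros H; unfold fin_form; apply csum_ext; intros; rewrite H; auto. Qed.
Lemma fin_form_plusd N d e x : fin_form N (fun i => Cplus (d i) (e i)) x = Cplus (fin_form N d x) (fin_form N e x).
Proof. unfold fin_form. rewrite <- csum_plus. apply csum_ext; intros; ring. Qed.
Lemma fin_form_scald N c d x : fin_form N (fun i => Cmult c (d i)) x = Cmult c (fin_form N d x).
Proof. unfold fin_form. rewrite <- csum_scal. apply csum_ext; intros; ring. Qed.
Lemma fin_form_restrict N d x : fin_form (S N) (fun i => if Nat.ltb i N then d i else RtoC 0) x = fin_form N d x.
Proof.
  rewrite fin_form_S. rewrite Nat.ltb_irrefl. rewrite (fin_form_ext N _ d). ring.
  intros i Hi. apply Nat.ltb_lt in Hi. rewrite Hi; auto.
Qed.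

Section FiniteForms.
Context (p : R) (a b w : nat -> C).
Context (Hp : 1 < p) (Ha : forall n, a n <> RtoC 0).

Lemma fin_form_bound N d x : inX p a b x ->
  Cmod (fin_form N d x) <= rsum (fun i => Cmod (d i) * coord_const a b i) N * normX p a b x.
Proof.
  intros H. unfold fin_form. eapply Rle_trans. apply Cmod_csum. rewrite Rmult_comm, <- rsum_scal.
  apply rsum_le. intros i _. rewrite Cmod_mult. pose proof (coord_bound p a b Hp Ha x i H).
  pose proof (Cmod_ge_0 (d i)). pose proof (normX_ge0 p a b x). nra.
Qed.

Lemma Fw_bounded_const : Fw_bounded p a b w ->
  exists Cb, 1 <= Cb /\ forall x, inX p a b x -> inX p a b (Fw w x) /\ normX p a b (Fw w x) <= Cb * normX p a b x.
Proof.
  intros [H1 [C0 H2]]. exists (Rabs C0 + 1). split. pose proof (Rabs_pos C0); lra.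
  intros x Hx. split; auto. eapply Rle_trans. apply H2; auto. pose proof (normX_ge0 p a b x).
  pose proof (Rle_abs C0). nra.
Qed.

Lemma Fw_iter_bound Cb : 1 <= Cb -> (forall x, inX p a b x -> inX p a b (Fw w x) /\ normX p a b (Fw w x) <= Cb * normX p a b x) ->
  forall n x, inX p a b x -> inX p a b (Fw_iter w n x) /\ normX p a b (Fw_iter w n x) <= Cb ^ n * normX p a b x.
Proof.
  intros HC H. induction n; intros x Hx. simpl. split; auto; lra.
  rewrite Fw_iter_S. destruct (IHn x Hx) as [H1 H2]. destruct (H _ H1) as [H3 H4]. split; auto.
  simpl. eapply Rle_trans. apply H4. rewrite Rmult_assoc. apply Rmult_le_compat_l; lra.
Qed.

Lemma coefinv_fin_form m : exists e, forall x, coefinv a b x m = fin_form (S m) e x.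
Proof.
  induction m.
  - exists (fun _ => Cinv (a 0%nat)). intros x. unfold fin_form; simpl. field; auto.
  - destruct IHm as [e He].
    exists (fun i => if Nat.eqb i (S m) then Cinv (a (S m)) else Cdiv (Cmult (Copp (b m)) (e i)) (a (S m))).
    intros x. rewrite fin_form_S. rewrite Nat.eqb_refl.
    rewrite (fin_form_ext (S m) _ (fun i => Cmult (Cdiv (Copp (b m)) (a (S m))) (e i))).
    rewrite fin_form_scald, <- He. simpl. field; auto.
    intros i Hi. destruct (Nat.eqb_spec i (S m)); [lia|]. field; auto.
Qed.

Lemma coef_sum_fin_form N (y : nat -> C) : exists d, forall x, csum (fun m => Cmult (coefinv a b x m) (y m)) N = fin_form N d x.
Proof.
  induction N. exists (fun _ => RtoC 0). intros; reflexivity.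
  destruct IHN as [d Hd]. destruct (coefinv_fin_form N) as [e He].
  exists (fun i => Cplus (if Nat.ltb i N then d i else RtoC 0) (Cmult (y N) (e i))).
  intros x. simpl. rewrite Hd, He, fin_form_plusd, fin_form_restrict, fin_form_scald. ring.
Qed.
End FiniteForms.

Definition unit_seq (m : nat) : nat -> C := fun i => if Nat.eqb i m then RtoC 1 else RtoC 0.
Definition head_seq (lam : nat -> C) (N : nat) : nat -> C := fun m => if Nat.ltb m N then lam m else RtoC 0.
Definition tail_seq (lam : nat -> C) (N : nat) : nat -> C := fun m => if Nat.ltb m N then RtoC 0 else lam m.
Definition lp_sum (p : R) (lam : nat -> C) : R := Series (fun n => rpowp (Cmod (lam n)) p).

Lemma Cmod_RtoC_ge0 r : 0 <= r -> Cmod (RtoC r) = r.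
Proof. intros; rewrite Cmod_R, Rabs_pos_eq; auto. Qed.

Section LpTails.
Context (p : R) (a b : nat -> C).
Context (Hp : 1 < p) (Ha : forall n, a n <> RtoC 0).

Lemma rpowp_Cmod0 : rpowp (Cmod (RtoC 0)) p = 0.
Proof. rewrite Cmod_0; apply rpowp_0. Qed.

Lemma in_lp_le u lam : (forall m, Cmod (u m) <= Cmod (lam m)) -> in_lp p lam -> in_lp p u /\ lp_sum p u <= lp_sum p lam.
Proof.
  intros H Hl. assert (Hu : in_lp p u).
  { unfold in_lp. apply (@ex_series_le R_AbsRing R_CompleteNormedModule) with (b := fun n => rpowp (Cmod (lam n)) p); auto.
    intros n. change (norm (rpowp (Cmod (u n)) p)) with (Rabs (rpowp (Cmod (u n)) p)).
    rewrite Rabs_pos_eq by apply rpowp_ge0. apply rpowp_le; [lra|]. split; auto using Cmod_ge_0. }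
  split; auto. unfold lp_sum. apply Series_le; auto. intros n; split. apply rpowp_ge0.
  apply rpowp_le; [lra|]. split; auto using Cmod_ge_0.
Qed.
Lemma lpnorm_lp_sum lam : lpnorm p lam = rpowp (lp_sum p lam) (/ p).
Proof. reflexivity. Qed.
Lemma lp_sum_ge0 lam : in_lp p lam -> 0 <= lp_sum p lam.
Proof. intros H; apply Series_ge0; auto. intros; apply rpowp_ge0. Qed.
Lemma lpnorm_le u lam : (forall m, Cmod (u m) <= Cmod (lam m)) -> in_lp p lam -> lpnorm p u <= lpnorm p lam.
Proof.
  intros H Hl. destruct (in_lp_le u lam H Hl) as [Hu HN]. rewrite !lpnorm_lp_sum.
  apply rpowp_le. left; apply Rinv_0_lt_compat; lra. split; auto. apply lp_sum_ge0; auto.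
Qed.
Lemma in_lp_fin u M : (forall m, (M <= m)%nat -> u m = RtoC 0) -> in_lp p u.
Proof. intros H. apply ex_series_fin with M. intros n Hn. rewrite H; auto. apply rpowp_Cmod0. Qed.

Lemma taylor_plus u v : taylor a b (fun n => Cplus (u n) (v n)) = fun n => Cplus (taylor a b u n) (taylor a b v n).
Proof. apply functional_extensionality; intros [|m]; simpl; ring. Qed.
Lemma taylor_scal c u : taylor a b (fun n => Cmult c (u n)) = fun n => Cmult c (taylor a b u n).
Proof. apply functional_extensionality; intros [|m]; simpl; ring. Qed.
Lemma taylor_zero : taylor a b (fun _ => RtoC 0) = fun _ => RtoC 0.
Proof. apply functional_extensionality; intros [|m]; simpl; ring. Qed.
Lemma head_tail lam N : lam = fun m => Cplus (head_seq lam N m) (tail_seq lam N m).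
Proof. apply functional_extensionality; intros m; unfold head_seq, tail_seq; destruct (Nat.ltb m N); ring. Qed.

Lemma lp_sum_tail_small lam : in_lp p lam -> forall eta, 0 < eta -> exists M, lp_sum p (tail_seq lam M) < eta.
Proof.
  intros Hl eta Heta. set (f := fun n => rpowp (Cmod (lam n)) p).
  assert (Hs : is_series f (Series f)) by (apply Series_correct; auto).
  assert (Hlim : is_lim_seq (sum_n f) (Series f)) by exact Hs.
  apply is_lim_seq_spec in Hlim. destruct (Hlim (mkposreal eta Heta)) as [N HN].
  exists (S N). unfold lp_sum.
  rewrite (Series_ext _ (fun n => if Nat.ltb n (S N) then 0 else f n)).
  2:{ intros n; unfold tail_seq, f; destruct (Nat.ltb n (S N)); auto. apply rpowp_Cmod0. }
  rewrite Series_incr_n_aux with (n := S N).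
  2:{ intros k Hk. apply Nat.ltb_lt in Hk; rewrite Hk; auto. }
  rewrite (Series_ext _ (fun k => f (S N + k)%nat)).
  2:{ intros k. destruct (Nat.ltb_spec (S N + k) (S N)); [lia|auto]. }
  pose proof (Series_incr_n f (S N) ltac:(lia) Hl) as E. simpl pred in E.
  specialize (HN N (le_n _)). simpl in HN. rewrite sum_n_Reals in HN.
  apply Rabs_lt_between in HN. lra.
Qed.

Lemma dual_zero psi : in_dual p a b psi -> psi (fun _ => RtoC 0) = RtoC 0.
Proof.
  intros [_ [Hs _]]. assert (H0 : inX p a b (fun _ => RtoC 0)).
  { rewrite <- taylor_zero. apply taylor_inX. apply in_lp_fin with O; auto. }
  pose proof (Hs (RtoC 0) _ H0) as E.
  transitivity (psi (fun n => Cmult (RtoC 0) ((fun _ : nat => RtoC 0) n))).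
  f_equal; apply functional_extensionality; intros; ring.
  rewrite E; ring.
Qed.

Lemma large_block psi eps N x : in_dual p a b psi -> 0 < eps -> inX p a b x ->
  (forall m, (m < N)%nat -> coefinv a b x m = RtoC 0) -> eps * normX p a b x < Cmod (psi x) ->
  exists M beta, in_lp p beta /\ (forall m, (m < N)%nat \/ (M <= m)%nat -> beta m = RtoC 0) /\
    eps * lpnorm p beta < Cmod (psi (taylor a b beta)).
Proof.
  intros Hpsi He Hx Hz Hgt. pose proof Hpsi as [Hadd [Hsc [Cp HCp]]].
  set (lam := coefinv a b x). destruct (inX_coefinv p a b Ha x Hx) as [Hl Ex]. fold lam in Hl, Ex.
  set (delta := Cmod (psi x) - eps * normX p a b x).
  set (K := Rabs Cp + 1).
  assert (HK : 0 < K) by (unfold K; pose proof (Rabs_pos Cp); lra).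
  assert (Hd : 0 < delta) by (unfold delta; lra).
  assert (Heta : 0 < rpowp (delta / K) p) by (apply rpowp_gt0; apply Rdiv_lt_0_compat; lra).
  destruct (lp_sum_tail_small lam Hl _ Heta) as [M HM].
  exists M, (head_seq lam M).
  assert (Hh : in_lp p (head_seq lam M)).
  { apply (in_lp_le _ lam); auto. intros m; unfold head_seq; destruct (Nat.ltb m M); [lra|]. rewrite Cmod_0; apply Cmod_ge_0. }
  assert (Ht : in_lp p (tail_seq lam M)).
  { apply (in_lp_le _ lam); auto. intros m; unfold tail_seq; destruct (Nat.ltb m M); [|lra]. rewrite Cmod_0; apply Cmod_ge_0. }
  split; auto. split.
  { intros m [Hm|Hm]; unfold head_seq. destruct (Nat.ltb m M); auto.
    destruct (Nat.ltb_spec m M); [lia|auto]. }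
  assert (Ex2 : x = fun n => Cplus (taylor a b (head_seq lam M) n) (taylor a b (tail_seq lam M) n)).
  { rewrite Ex at 1. rewrite (head_tail lam M) at 1. apply taylor_plus. }
  assert (Epsi : psi x = Cplus (psi (taylor a b (head_seq lam M))) (psi (taylor a b (tail_seq lam M)))).
  { rewrite Ex2 at 1. apply Hadd; apply taylor_inX; auto. }
  assert (Htl : Cmod (psi (taylor a b (tail_seq lam M))) < delta).
  { eapply Rle_lt_trans. apply HCp. apply taylor_inX; auto. rewrite normX_taylor by auto.
    assert (lpnorm p (tail_seq lam M) < delta / K).
    { rewrite lpnorm_lp_sum. rewrite <- (rpowp_rpowp_inv (delta / K) p) by (try lra; apply Rlt_le, Rdiv_lt_0_compat; lra).
      apply rpowp_lt. apply Rinv_0_lt_compat; lra. split; auto. apply lp_sum_ge0; auto. }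
    pose proof (lpnorm_ge0 p (tail_seq lam M)). pose proof (Rle_abs Cp).
    apply Rle_lt_trans with (K * lpnorm p (tail_seq lam M)). unfold K; nra.
    apply Rmult_lt_compat_l with (r := K) in H; auto. replace (K * (delta / K)) with delta in H by (field; lra). auto. }
  assert (Hle : lpnorm p (head_seq lam M) <= normX p a b x).
  { unfold normX. fold lam. apply lpnorm_le; auto. intros m; unfold head_seq; destruct (Nat.ltb m M); [lra|]. rewrite Cmod_0; apply Cmod_ge_0. }
  pose proof (Cmod_triangle (psi (taylor a b (head_seq lam M))) (psi (taylor a b (tail_seq lam M)))).
  rewrite <- Epsi in H. unfold delta in Htl. nra.
Qed.
End LpTails.

Lemma rsum_ge_const c f n : (forall i, c <= f i) -> c * INR n <= rsum f n.
Proof. intros H; induction n as [|n IH]; [simpl; lra|]. rewrite S_INR; simpl. specialize (H n). lra. Qed.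

Lemma Rpower_unbounded s A : 0 < s -> exists K : nat, (1 <= K)%nat /\ A < Rpower (INR K) s.
Proof.
  intros Hs. set (X := Rabs A + 1). assert (HX : 0 < X) by (unfold X; pose proof (Rabs_pos A); lra).
  destruct (archimed (Rpower X (/ s))) as [H1 _].
  assert (Hpos : 0 < Rpower X (/ s)) by (unfold Rpower; apply exp_pos).
  set (K := S (Z.to_nat (up (Rpower X (/ s))))). exists K. split. unfold K; lia.
  assert (Rpower X (/ s) <= INR K).
  { unfold K. rewrite S_INR. rewrite INR_IZR_INZ, Z2Nat.id. lra.
    apply le_IZR. lra. }
  apply Rlt_le_trans with X. unfold X; pose proof (Rle_abs A); lra.
  replace X with (Rpower (Rpower X (/ s)) s) at 1.
  apply Rle_Rpower_l; lra. rewrite Rpower_mult, Rinv_l, Rpower_1; lra.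
Qed.

Section DualTails.
Context (p : R) (a b : nat -> C).
Context (Hp : 1 < p) (Ha : forall n, a n <> RtoC 0).

Lemma lp_sum_scal c u : in_lp p u -> lp_sum p (fun m => Cmult c (u m)) = rpowp (Cmod c) p * lp_sum p u.
Proof.
  intros Hu. unfold lp_sum. rewrite <- Series_scal_l. apply Series_ext; intros n.
  rewrite Cmod_mult, rpowp_mult; auto using Cmod_ge_0.
Qed.
Lemma in_lp_scal c u : in_lp p u -> in_lp p (fun m => Cmult c (u m)).
Proof.
  intros Hu. unfold in_lp. eapply ex_series_ext. 2: apply (@ex_series_scal_l R_AbsRing R_NormedModule (rpowp (Cmod c) p) _ Hu).
  intros n. simpl. change (scal (rpowp (Cmod c) p) (rpowp (Cmod (u n)) p)) with (rpowp (Cmod c) p * rpowp (Cmod (u n)) p).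
  rewrite Cmod_mult, rpowp_mult; auto using Cmod_ge_0.
Qed.

(* Since p > 1, the norm of a sum of K disjoint unit blocks is K^(1/p) = o(K). *)
Lemma dual_sublinear psi eps : in_dual p a b psi -> 0 < eps ->
  ~ (forall K : nat, exists v, in_lp p v /\ lp_sum p v = INR K /\ eps * INR K <= Cmod (psi (taylor a b v))).
Proof.
  intros [_ [_ [Cp HCp]]] He H. set (KC := Rabs Cp + 1).
  assert (HKC : 0 < KC) by (unfold KC; pose proof (Rabs_pos Cp); lra).
  set (s := 1 - / p).
  assert (Hs : 0 < s) by (unfold s; assert (/ p < 1) by (rewrite <- Rinv_1; apply Rinv_lt_contravar; lra); lra).
  destruct (Rpower_unbounded s (KC / eps) Hs) as [K [HK1 HK2]].
  destruct (H K) as [v [Hv [Hsum Hlow]]].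
  assert (HINR : 0 < INR K) by (apply lt_0_INR; lia).
  assert (Hroot : 0 < Rpower (INR K) (/ p)) by (unfold Rpower; apply exp_pos).
  assert (Hup : Cmod (psi (taylor a b v)) <= KC * Rpower (INR K) (/ p)).
  { eapply Rle_trans. apply HCp. apply taylor_inX; auto. rewrite normX_taylor by auto.
    rewrite lpnorm_lp_sum, Hsum, rpowp_pos by auto. pose proof (Rle_abs Cp). unfold KC; nra. }
  assert (EK : INR K = Rpower (INR K) (/ p) * Rpower (INR K) s).
  { rewrite <- Rpower_plus. unfold s. replace (/ p + (1 - / p)) with 1 by ring. rewrite Rpower_1; auto. }
  assert (eps * Rpower (INR K) s <= KC).
  { apply Rmult_le_reg_l with (Rpower (INR K) (/ p)); auto. rewrite EK in Hlow. nra. }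
  assert (eps * (KC / eps) = KC) by (field; lra). nra.
Qed.

Lemma normalize_block psi eps beta : in_dual p a b psi -> 0 < eps -> in_lp p beta ->
  eps * lpnorm p beta < Cmod (psi (taylor a b beta)) ->
  exists s r, lp_sum p (fun m => Cmult s (beta m)) = 1 /\ eps < r /\
    psi (taylor a b (fun m => Cmult s (beta m))) = RtoC r.
Proof.
  intros Hpsi He Hb Hgt. pose proof Hpsi as [_ [Hsc [Cp HCp]]].
  set (z := psi (taylor a b beta)). set (L := lpnorm p beta). fold z L in Hgt.
  assert (Hz : Cmod z <= (Rabs Cp + 1) * L).
  { eapply Rle_trans. apply HCp. apply taylor_inX; auto. rewrite normX_taylor by auto.
    pose proof (lpnorm_ge0 p beta) as H0. fold L in H0 |- *.
    apply Rle_trans with (Rabs Cp * L); [apply Rmult_le_compat_r; auto; apply Rle_abs | nra]. }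
  assert (HL : 0 < L).
  { pose proof (lpnorm_ge0 p beta) as H0. fold L in H0.
    destruct (Req_dec L 0) as [E|E]; [rewrite E, Rmult_0_r in *; lra | lra]. }
  assert (Hz0 : 0 < Cmod z) by nra.
  assert (Hne : RtoC (Cmod z * L) <> RtoC 0) by (intro E; injection E; intros; nra).
  exists (Cdiv (Cconj z) (RtoC (Cmod z * L))), (Cmod z / L). split; [|split].
  - rewrite lp_sum_scal by auto. rewrite Cmod_div, Cmod_conj, Cmod_R, Rabs_pos_eq by (auto; nra).
    replace (Cmod z / (Cmod z * L)) with (/ L) by (field; lra).
    assert (lp_sum p beta = rpowp L p).
    { unfold L. rewrite lpnorm_lp_sum, rpowp_inv_rpowp; auto. lra. apply lp_sum_ge0; auto. }
    rewrite H, <- rpowp_mult, Rinv_l by (lra || left; apply Rinv_0_lt_compat; lra). apply rpowp_1.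
  - apply Rmult_lt_reg_r with L; auto. unfold Rdiv. rewrite Rmult_assoc, Rinv_l; lra.
  - rewrite taylor_scal, Hsc by (apply taylor_inX; auto). fold z.
    assert (E : Cmult (Cconj z) z = RtoC (Cmod z ^ 2)) by (rewrite Cmod2_conj; ring).
    unfold Cdiv. rewrite Cmult_comm, Cmult_assoc, (Cmult_comm z), E.
    unfold RtoC, Cinv, Cmult; simpl. f_equal; field; lra.
Qed.

Lemma sum_disjoint_blocks psi (Ns : nat -> nat) (beta : nat -> nat -> C) (r : nat -> R) :
  in_dual p a b psi -> (forall k, (Ns k <= Ns (S k))%nat) ->
  (forall k, in_lp p (beta k) /\ lp_sum p (beta k) = 1 /\ psi (taylor a b (beta k)) = RtoC (r k)) ->
  (forall k m, (m < Ns k)%nat \/ (Ns (S k) <= m)%nat -> beta k m = RtoC 0) ->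
  forall K, in_lp p (fun m => csum (fun k => beta k m) K) /\
    lp_sum p (fun m => csum (fun k => beta k m) K) = INR K /\
    (forall m, (Ns K <= m)%nat -> csum (fun k => beta k m) K = RtoC 0) /\
    psi (taylor a b (fun m => csum (fun k => beta k m) K)) = RtoC (rsum r K).
Proof.
  intros Hpsi Hmono Hbeta Hsupp. pose proof Hpsi as [Hadd _].
  induction K as [|K [H1 [H2 [H3 H4]]]]; cbn [csum rsum].
  - split. apply in_lp_fin with O; auto. split. apply Series_zero; intros; apply rpowp_Cmod0.
    split; auto. rewrite taylor_zero. apply (dual_zero p a b psi Hpsi).
  - destruct (Hbeta K) as [Hb1 [Hb2 Hb3]]. split; [|split; [|split]].
    + apply in_lp_fin with (Ns (S K)). intros m Hm. rewrite H3, Hsupp; [ring|right|]; auto.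
      specialize (Hmono K). lia.
    + unfold lp_sum.
      rewrite (Series_ext _ (fun m => rpowp (Cmod (csum (fun k => beta k m) K)) p + rpowp (Cmod (beta K m)) p)).
      rewrite Series_plus by auto. fold (lp_sum p (fun m => csum (fun k => beta k m) K)) (lp_sum p (beta K)).
      rewrite H2, Hb2, S_INR; auto.
      intros m. destruct (Nat.lt_ge_cases m (Ns K)).
      * rewrite (Hsupp K m) by (left; auto). rewrite Cplus_0_r, rpowp_Cmod0. ring.
      * rewrite (H3 m) by auto. rewrite Cplus_0_l, rpowp_Cmod0. ring.
    + intros m Hm. rewrite H3, Hsupp; [ring|right; auto|]. specialize (Hmono K). lia.
    + rewrite taylor_plus, Hadd by (apply taylor_inX; auto). rewrite H4, Hb3.
      unfold RtoC, Cplus; simpl. f_equal; ring.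
Qed.

(* Blocks of support in [N, M) on which psi is large would add up to a violation of [dual_sublinear]. *)
Lemma no_large_disjoint_blocks psi eps : in_dual p a b psi -> 0 < eps ->
  (forall N, exists q : nat * (nat -> C), in_lp p (snd q) /\
      (forall m, (m < N)%nat \/ (fst q <= m)%nat -> snd q m = RtoC 0) /\
      eps * lpnorm p (snd q) < Cmod (psi (taylor a b (snd q)))) -> False.
Proof.
  intros Hpsi He H.
  destruct (functional_choice _ H) as [F HF].
  set (Ns := fun k => Nat.iter k (fun N => Nat.max (fst (F N)) N) O).
  assert (Hmono : forall k, (Ns k <= Ns (S k))%nat) by (intros; simpl; lia).
  assert (Hnorm : forall k, exists sr : C * R, lp_sum p (fun m => Cmult (fst sr) (snd (F (Ns k)) m)) = 1 /\
    eps < snd sr /\ psi (taylor a b (fun m => Cmult (fst sr) (snd (F (Ns k)) m))) = RtoC (snd sr)).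
  { intros k. destruct (HF (Ns k)) as [Hb [_ Hgt]].
    destruct (normalize_block psi eps _ Hpsi He Hb Hgt) as [s [r Hsr]]. exists (s, r); exact Hsr. }
  destruct (functional_choice _ Hnorm) as [sr Hsr].
  set (beta := fun k m => Cmult (fst (sr k)) (snd (F (Ns k)) m)).
  apply (dual_sublinear psi eps Hpsi He). intros K.
  destruct (sum_disjoint_blocks psi Ns beta (fun k => snd (sr k)) Hpsi Hmono) with (K := K)
    as [Hv [Hsum [_ Hval]]].
  - intros k. destruct (Hsr k) as [H1 [_ H3]]. split; [|split]; auto.
    apply in_lp_scal, HF.
  - intros k m Hm. unfold beta. rewrite (proj1 (proj2 (HF (Ns k)))); [ring|].
    destruct Hm as [Hm|Hm]; [left; auto|right]. simpl in Hm. lia.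
  - exists (fun m => csum (fun k => beta k m) K). split; [|split]; auto.
    rewrite Hval, Cmod_RtoC_ge0.
    + apply rsum_ge_const. intros i; apply Rlt_le, Hsr.
    + apply Rle_trans with (eps * INR K). pose proof (pos_INR K); nra.
      apply rsum_ge_const. intros i; apply Rlt_le, Hsr.
Qed.

Lemma dual_small_on_tails psi eps : in_dual p a b psi -> 0 < eps -> exists N, forall x, inX p a b x ->
  (forall m, (m < N)%nat -> coefinv a b x m = RtoC 0) -> Cmod (psi x) <= eps * normX p a b x.
Proof.
  intros Hpsi He. apply NNPP; intro Hn. apply (no_large_disjoint_blocks psi eps Hpsi He). intros N.
  assert (exists x, inX p a b x /\ (forall m, (m < N)%nat -> coefinv a b x m = RtoC 0) /\ eps * normX p a b x < Cmod (psi x)).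
  { apply NNPP; intro Hn2. apply Hn. exists N. intros x Hx Hz. apply Rnot_lt_le. intro Hlt. apply Hn2. exists x; auto. }
  destruct H as [x [Hx [Hz Hlt]]].
  destruct (large_block p a b Hp Ha psi eps N x Hpsi He Hx Hz Hlt) as [M [beta [H1 [H2 H3]]]].
  exists (M, beta); simpl; auto.
Qed.

Lemma dual_approx_fin_form psi eps : in_dual p a b psi -> 0 < eps -> exists N d, forall x, inX p a b x ->
  Cmod (Cminus (psi x) (fin_form N d x)) <= eps * normX p a b x.
Proof.
  intros Hpsi He. pose proof Hpsi as [Hadd [Hsc [Cp HCp]]].
  destruct (dual_small_on_tails psi eps Hpsi He) as [N HN].
  set (y := fun m => psi (taylor a b (unit_seq m))).
  destruct (coef_sum_fin_form a b Ha N y) as [d Hd]. exists N, d. intros x Hx.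
  set (lam := coefinv a b x). destruct (inX_coefinv p a b Ha x Hx) as [Hl Ex]. fold lam in Hl, Ex.
  assert (Hunit : forall m, in_lp p (unit_seq m)).
  { intros m. apply in_lp_fin with (S m). intros n Hn. unfold unit_seq. destruct (Nat.eqb_spec n m); [lia|auto]. }
  assert (Hhead : forall N', in_lp p (head_seq lam N') /\ psi (taylor a b (head_seq lam N')) = csum (fun m => Cmult (lam m) (y m)) N').
  { induction N'.
    - assert (head_seq lam 0 = fun _ => RtoC 0) by reflexivity. rewrite H. split. apply in_lp_fin with O; auto.
      rewrite taylor_zero. apply (dual_zero p a b psi Hpsi).
    - destruct IHN' as [H1 H2].
      assert (E : head_seq lam (S N') = fun i => Cplus (head_seq lam N' i) (Cmult (lam N') (unit_seq N' i))).
      { apply functional_extensionality; intros i. unfold head_seq, unit_seq.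
        destruct (Nat.ltb_spec i (S N')), (Nat.ltb_spec i N'), (Nat.eqb_spec i N'); try lia; try subst i; ring. }
      split. apply in_lp_fin with (S N'). intros n Hn. unfold head_seq. destruct (Nat.ltb_spec n (S N')); [lia|auto].
      rewrite E, taylor_plus, taylor_scal. rewrite Hadd. rewrite Hsc. rewrite H2. simpl. fold (y N'). ring.
      apply taylor_inX; auto. apply taylor_inX; auto. rewrite <- taylor_scal. apply taylor_inX. apply in_lp_scal; auto. }
  assert (Ht : in_lp p (tail_seq lam N)).
  { apply (in_lp_le p Hp _ lam); auto. intros m; unfold tail_seq; destruct (Nat.ltb m N); [|lra]. rewrite Cmod_0; apply Cmod_ge_0. }
  destruct (Hhead N) as [Hh1 Hh2].
  assert (Epsi : psi x = Cplus (psi (taylor a b (head_seq lam N))) (psi (taylor a b (tail_seq lam N)))).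
  { rewrite <- Hadd by (apply taylor_inX; auto). rewrite <- taylor_plus, <- head_tail, <- Ex; auto. }
  rewrite <- Hd. fold lam. rewrite <- Hh2, Epsi.
  replace (Cminus (Cplus (psi (taylor a b (head_seq lam N))) (psi (taylor a b (tail_seq lam N)))) (psi (taylor a b (head_seq lam N))))
    with (psi (taylor a b (tail_seq lam N))) by ring.
  eapply Rle_trans. apply HN. apply taylor_inX; auto.
  intros m Hm. rewrite coefinv_taylor by auto. unfold tail_seq. apply Nat.ltb_lt in Hm; rewrite Hm; auto.
  rewrite normX_taylor by auto. apply Rmult_le_compat_l. lra.
  unfold normX; fold lam. apply (lpnorm_le p Hp); auto.
  intros m; unfold tail_seq; destruct (Nat.ltb m N); [|lra]. rewrite Cmod_0; apply Cmod_ge_0.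
Qed.
End DualTails.

Definition code_at (r i : nat) : nat := fst (Cantor.of_nat (Nat.iter i (fun r => snd (Cantor.of_nat r)) r)).
Definition gauss_rat (c : nat) : C :=
  let (u1, c1) := Cantor.of_nat c in let (u2, c2) := Cantor.of_nat c1 in
  let (v1, c3) := Cantor.of_nat c2 in let (v2, P) := Cantor.of_nat c3 in
  ((INR u1 - INR u2) / (INR P + 1), (INR v1 - INR v2) / (INR P + 1)).
(* Target k = <<N, r>, L> is the combination of the first N coordinates with Gaussian-rational
   coefficients read off r; the unused component L makes each target recur infinitely often. *)
Definition target_len (k : nat) : nat := fst (Cantor.of_nat (fst (Cantor.of_nat k))).
Definition target_code (k : nat) : nat := snd (Cantor.of_nat (fst (Cantor.of_nat k))).
Definition target_coef (k i : nat) : C := gauss_rat (code_at (target_code k) i).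
Definition target (k : nat) : (nat -> C) -> C := fin_form (target_len k) (target_coef k).

Lemma code_at_surj N (f : nat -> nat) : exists r, forall i, (i < N)%nat -> code_at r i = f i.
Proof.
  revert f; induction N; intros f. exists O; intros; lia.
  destruct (IHN (fun i => f (S i))) as [r Hr]. exists (Cantor.to_nat (f O, r)).
  intros [|i] Hi; unfold code_at.
  - change (Nat.iter 0 (fun r0 => snd (Cantor.of_nat r0)) (Cantor.to_nat (f O, r))) with (Cantor.to_nat (f O, r)).
    rewrite Cantor.cancel_of_to; auto.
  - rewrite Nat.iter_succ_r. cbv beta. rewrite Cantor.cancel_of_to. cbn [snd].
    apply Hr; lia.
Qed.

Lemma IZR_as_INR_diff z : IZR z = INR (Z.to_nat z) - INR (Z.to_nat (- z)).
Proof.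
  destruct z; simpl. lra.
  rewrite INR_IZR_INZ, positive_nat_Z. lra.
  rewrite INR_IZR_INZ, positive_nat_Z. rewrite <- Pos2Z.opp_pos. rewrite opp_IZR. lra.
Qed.

Lemma R_frac_approx t Q : 0 < Q -> exists u1 u2 : nat, Rabs (t - (INR u1 - INR u2) / Q) <= / Q.
Proof.
  intros HQ. destruct (archimed (t * Q)) as [H1 H2].
  exists (Z.to_nat (up (t * Q))), (Z.to_nat (- up (t * Q))). rewrite <- IZR_as_INR_diff.
  replace (t - IZR (up (t * Q)) / Q) with ((t * Q - IZR (up (t * Q))) / Q) by (field; lra).
  unfold Rdiv. rewrite Rabs_mult, Rabs_inv, (Rabs_pos_eq Q) by lra.
  rewrite <- (Rmult_1_l (/ Q)) at 2. apply Rmult_le_compat_r. left; apply Rinv_0_lt_compat; lra.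
  apply Rabs_le; lra.
Qed.

Lemma gauss_rat_dense z eta : 0 < eta -> exists c, Cmod (Cminus z (gauss_rat c)) <= eta.
Proof.
  intros He. destruct (archimed (2 / eta)) as [H1 _].
  set (P := Z.to_nat (up (2 / eta))).
  assert (HP : 2 / eta < INR P + 1).
  { unfold P. destruct (Z_le_gt_dec 0 (up (2 / eta))).
    rewrite INR_IZR_INZ, Z2Nat.id by auto. lra.
    assert (2 / eta > 0) by (apply Rdiv_lt_0_compat; lra). assert (IZR 0 < IZR (up (2 / eta))) by (simpl; lra). apply lt_IZR in H0. lia. }
  set (Q := INR P + 1). assert (HQ : 0 < Q) by (unfold Q; pose proof (pos_INR P); lra).
  destruct (R_frac_approx (fst z) Q HQ) as [u1 [u2 Hu]].
  destruct (R_frac_approx (snd z) Q HQ) as [v1 [v2 Hv]].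
  exists (Cantor.to_nat (u1, Cantor.to_nat (u2, Cantor.to_nat (v1, Cantor.to_nat (v2, P))))).
  unfold gauss_rat. rewrite !Cantor.cancel_of_to. fold Q.
  eapply Rle_trans. apply Cmod_2Rmax. destruct z as [zr zi]. simpl in Hu, Hv.
  assert (sqrt 2 <= 2). { rewrite <- (sqrt_square 2) at 2 by lra. apply sqrt_le_1_alt; lra. }
  assert (2 / Q <= eta).
  { apply Rmult_le_reg_r with Q; auto. unfold Rdiv. rewrite Rmult_assoc, Rinv_l by lra.
    apply Rmult_lt_compat_l with (r := eta) in HP; auto. unfold Rdiv in HP. rewrite <- Rmult_assoc, (Rmult_comm eta 2), Rmult_assoc, Rinv_r in HP by lra. fold Q in HP. lra. }
  apply Rle_trans with (sqrt 2 * / Q).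
  apply Rmult_le_compat_l. apply sqrt_pos. apply Rmax_lub. exact Hu. exact Hv.
  assert (0 < / Q) by (apply Rinv_0_lt_compat; lra). unfold Rdiv in *. nra.
Qed.

Lemma fin_form_minusd N d e x : fin_form N (fun i => Cminus (d i) (e i)) x = Cminus (fin_form N d x) (fin_form N e x).
Proof. unfold fin_form; induction N; simpl. ring. rewrite IHN; ring. Qed.

Section Targets.
Context (p : R) (a b : nat -> C).
Context (Hp : 1 < p) (Ha : forall n, a n <> RtoC 0).

Lemma targets_dense psi eps : in_dual p a b psi -> 0 < eps -> forall L, exists k, (L <= k)%nat /\
  forall x, inX p a b x -> Cmod (Cminus (psi x) (target k x)) <= eps * normX p a b x.
Proof.
  intros Hpsi He L. destruct (dual_approx_fin_form p a b Hp Ha psi (eps / 2) Hpsi ltac:(lra)) as [N [d Hd]].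
  set (SB := rsum (fun i => coord_const a b i) N + 1).
  assert (HSB : 0 < SB) by (unfold SB; pose proof (rsum_ge0 (fun i => coord_const a b i) N (coord_const_ge0 a b)); lra).
  set (eta := eps / 2 / SB). assert (Heta : 0 < eta) by (unfold eta; apply Rdiv_lt_0_compat; lra).
  assert (Hc : forall i, exists c, Cmod (Cminus (d i) (gauss_rat c)) <= eta) by (intros; apply gauss_rat_dense; auto).
  set (f := fun i => proj1_sig (constructive_indefinite_description _ (Hc i))).
  assert (Hf : forall i, Cmod (Cminus (d i) (gauss_rat (f i))) <= eta).
  { intros i; unfold f; destruct (constructive_indefinite_description _ (Hc i)); auto. }
  destruct (code_at_surj N f) as [r Hr].
  set (k := Cantor.to_nat (Cantor.to_nat (N, r), L)).
  exists k. split. unfold k. pose proof (Cantor.to_nat_non_decreasing (Cantor.to_nat (N, r)) L). lia.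
  assert (HTN : target_len k = N) by (unfold target_len, k; rewrite Cantor.cancel_of_to; cbn [fst]; rewrite Cantor.cancel_of_to; reflexivity).
  assert (HTr : target_code k = r) by (unfold target_code, k; rewrite Cantor.cancel_of_to; cbn [fst]; rewrite Cantor.cancel_of_to; reflexivity).
  intros x Hx. unfold target. rewrite HTN.
  replace (Cminus (psi x) (fin_form N (target_coef k) x)) with
    (Cplus (Cminus (psi x) (fin_form N d x)) (fin_form N (fun i => Cminus (d i) (target_coef k i)) x)).
  2:{ rewrite fin_form_minusd. ring. }
  eapply Rle_trans. apply Cmod_triangle.
  pose proof (Hd x Hx).
  pose proof (fin_form_bound p a b Hp Ha N (fun i => Cminus (d i) (target_coef k i)) x Hx).
  assert (rsum (fun i => Cmod (Cminus (d i) (target_coef k i)) * coord_const a b i) N <= eta * SB).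
  { apply Rle_trans with (rsum (fun i => eta * coord_const a b i) N).
    apply rsum_le. intros i Hi. unfold target_coef. rewrite HTr, Hr by auto. apply Rmult_le_compat_r. apply coord_const_ge0. auto.
    rewrite rsum_scal. apply Rmult_le_compat_l; [lra|]. unfold SB. apply Rle_trans with (rsum (fun i => coord_const a b i) N + 0); [right; rewrite Rplus_0_r; reflexivity| lra]. }
  assert (eta * SB = eps / 2) by (unfold eta; field; lra).
  pose proof (normX_ge0 p a b x). nra.
Qed.
End Targets.

Definition CSeries (f : nat -> C) : C := (Series (fun k => fst (f k)), Series (fun k => snd (f k))).

Lemma fst_le_Cmod z : Rabs (fst z) <= Cmod z.
Proof. eapply Rle_trans; [apply Rmax_l|apply Rmax_Cmod]. Qed.
Lemma snd_le_Cmod z : Rabs (snd z) <= Cmod z.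
Proof. eapply Rle_trans; [apply Rmax_r|apply Rmax_Cmod]. Qed.

Lemma ex_series_of_Rabs_le (f : nat -> R) (g : nat -> R) : (forall k, Rabs (f k) <= g k) -> ex_series g ->
  ex_series (fun k => Rabs (f k)) /\ ex_series f.
Proof.
  intros H Hg. assert (ex_series (fun k => Rabs (f k))).
  { apply (@ex_series_le R_AbsRing R_CompleteNormedModule) with g; auto. intros n.
    change (norm (Rabs (f n))) with (Rabs (Rabs (f n))). rewrite Rabs_Rabsolu; auto. }
  split; auto. apply ex_series_Rabs; auto.
Qed.

Lemma CSeries_bound f g : (forall k, Cmod (f k) <= g k) -> ex_series g ->
  ex_series (fun k => fst (f k)) /\ ex_series (fun k => snd (f k)) /\ Cmod (CSeries f) <= 2 * Series g.
Proof.
  intros H Hg.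
  destruct (ex_series_of_Rabs_le (fun k => fst (f k)) g) as [H1 H2]. intros; eapply Rle_trans; [apply fst_le_Cmod|auto]. auto.
  destruct (ex_series_of_Rabs_le (fun k => snd (f k)) g) as [H3 H4]. intros; eapply Rle_trans; [apply snd_le_Cmod|auto]. auto.
  split; auto. split; auto.
  assert (Rabs (Series (fun k => fst (f k))) <= Series g).
  { eapply Rle_trans. apply Series_Rabs; auto. apply Series_le; auto. intros; split. apply Rabs_pos.
    eapply Rle_trans; [apply fst_le_Cmod|auto]. }
  assert (Rabs (Series (fun k => snd (f k))) <= Series g).
  { eapply Rle_trans. apply Series_Rabs; auto. apply Series_le; auto. intros; split. apply Rabs_pos.
    eapply Rle_trans; [apply snd_le_Cmod|auto]. }
  eapply Rle_trans. apply Cmod_2Rmax. unfold CSeries; simpl.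
  assert (sqrt 2 <= 2). { rewrite <- (sqrt_square 2) at 2 by lra. apply sqrt_le_1_alt; lra. }
  assert (Rmax (Rabs (Series (fun k => fst (f k)))) (Rabs (Series (fun k => snd (f k)))) <= Series g) by (apply Rmax_lub; auto).
  assert (0 <= Rmax (Rabs (Series (fun k => fst (f k)))) (Rabs (Series (fun k => snd (f k))))).
  { eapply Rle_trans; [apply Rabs_pos|apply Rmax_l]. }
  pose proof (sqrt_pos 2). nra.
Qed.

Lemma CSeries_plus f g : ex_series (fun k => fst (f k)) -> ex_series (fun k => snd (f k)) ->
  ex_series (fun k => fst (g k)) -> ex_series (fun k => snd (g k)) ->
  CSeries (fun k => Cplus (f k) (g k)) = Cplus (CSeries f) (CSeries g).
Proof.
  intros. unfold CSeries, Cplus; simpl. f_equal; apply Series_plus; auto.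
Qed.
Lemma CSeries_scal c f : ex_series (fun k => fst (f k)) -> ex_series (fun k => snd (f k)) ->
  CSeries (fun k => Cmult c (f k)) = Cmult c (CSeries f).
Proof.
  intros H1 H2. unfold CSeries, Cmult; simpl. f_equal.
  - rewrite (Series_ext _ (fun k => fst c * fst (f k) - snd c * snd (f k))) by auto.
    rewrite Series_minus, !Series_scal_l; auto. apply (@ex_series_scal_l R_AbsRing R_NormedModule); auto.
    apply (@ex_series_scal_l R_AbsRing R_NormedModule); auto.
  - rewrite (Series_ext _ (fun k => fst c * snd (f k) + snd c * fst (f k))) by auto.
    rewrite Series_plus, !Series_scal_l; auto. apply (@ex_series_scal_l R_AbsRing R_NormedModule); auto.
    apply (@ex_series_scal_l R_AbsRing R_NormedModule); auto.
Qed.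
Lemma CSeries_single z j : CSeries (fun k => if Nat.eqb k j then z else RtoC 0) = z.
Proof.
  unfold CSeries. destruct z as [zr zi].
  rewrite (Series_ext _ (fun k => if Nat.eqb k j then zr else 0)).
  rewrite (Series_ext (fun k => snd _) (fun k => if Nat.eqb k j then zi else 0)).
  rewrite !Series_single; auto.
  intros k0; destruct (Nat.eqb k0 j); auto. intros k0; destruct (Nat.eqb k0 j); auto.
Qed.
Lemma Series_geom_scal G q : Rabs q < 1 -> Series (fun k => G * q ^ k) = G / (1 - q).
Proof. intros. rewrite Series_scal_l, Series_geom; auto. Qed.
Lemma ex_geom_scal G q : Rabs q < 1 -> ex_series (fun k => G * q ^ k).
Proof. intros. apply (@ex_series_scal_l R_AbsRing R_NormedModule G). apply ex_series_geom; auto. Qed.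

Lemma CSeries_ext f g : (forall k, f k = g k) -> CSeries f = CSeries g.
Proof. intros H. f_equal; apply functional_extensionality; auto. Qed.

Lemma CSeries_near_single f j z B : 0 <= B -> (forall k, (k < j)%nat -> f k = RtoC 0) -> f j = z ->
  (forall k, (j < k)%nat -> Cmod (f k) <= B * (1/2) ^ k) ->
  Cmod (Cminus (CSeries f) z) <= 4 * B.
Proof.
  intros HB Hlow Hj Hhigh.
  set (h := fun k => if Nat.leb k j then RtoC 0 else f k).
  assert (Hh : forall k, Cmod (h k) <= B * (1/2) ^ k).
  { intros k. unfold h. destruct (Nat.leb_spec k j); [|apply Hhigh; lia].
    rewrite Cmod_0. pose proof (pow_le (1/2) k ltac:(lra)). nra. }
  assert (Hq : Rabs (1/2) < 1) by (rewrite Rabs_pos_eq; lra).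
  destruct (CSeries_bound h _ Hh (ex_geom_scal _ _ Hq)) as [E1 [E2 E3]].
  rewrite Series_geom_scal in E3 by auto.
  assert (Ef : CSeries f = Cplus z (CSeries h)).
  { rewrite (CSeries_ext f (fun k => Cplus (if Nat.eqb k j then z else RtoC 0) (h k))).
    - rewrite CSeries_plus, CSeries_single; auto;
        apply ex_series_fin with (S j); intros n Hn; destruct (Nat.eqb_spec n j); auto; lia.
    - intros k. unfold h. destruct (Nat.eqb_spec k j) as [->|Hne]; [rewrite Nat.leb_refl, Hj; ring|].
      destruct (Nat.leb_spec k j); [rewrite Hlow by lia|]; ring. }
  rewrite Ef. replace (Cminus (Cplus z (CSeries h)) z) with (CSeries h) by ring.
  assert (B / (1 - 1/2) = 2 * B) by field. lra.
Qed.

Section SeriesDual.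
Context (p : R) (a b : nat -> C).

Lemma CSeries_dual (v : nat -> (nat -> C) -> C) G q : 0 <= q < 1 ->
  (forall k x y, v k (fun n => Cplus (x n) (y n)) = Cplus (v k x) (v k y)) ->
  (forall k c x, v k (fun n => Cmult c (x n)) = Cmult c (v k x)) ->
  (forall k x, inX p a b x -> Cmod (v k x) <= G * normX p a b x * q ^ k) ->
  in_dual p a b (fun x => CSeries (fun k => v k x)).
Proof.
  intros Hq Hadd Hsc Hv. assert (Hq' : Rabs q < 1) by (rewrite Rabs_pos_eq; lra).
  split; [|split].
  - intros x y Hx Hy.
    destruct (CSeries_bound (fun k => v k x) _ (fun k => Hv k x Hx) (ex_geom_scal _ _ Hq')) as [E1 [E2 _]].
    destruct (CSeries_bound (fun k => v k y) _ (fun k => Hv k y Hy) (ex_geom_scal _ _ Hq')) as [E3 [E4 _]].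
    rewrite <- CSeries_plus by auto. apply CSeries_ext; auto.
  - intros c x Hx.
    destruct (CSeries_bound (fun k => v k x) _ (fun k => Hv k x Hx) (ex_geom_scal _ _ Hq')) as [E1 [E2 _]].
    rewrite <- CSeries_scal by auto. apply CSeries_ext; auto.
  - exists (2 * (G / (1 - q))). intros x Hx.
    destruct (CSeries_bound (fun k => v k x) _ (fun k => Hv k x Hx) (ex_geom_scal _ _ Hq')) as [_ [_ E]].
    rewrite Series_geom_scal in E by auto.
    replace (2 * (G / (1 - q)) * normX p a b x) with (2 * (G * normX p a b x / (1 - q))) by (field; lra). auto.
Qed.
End SeriesDual.

Lemma Fw_adj_iter w n (phi : (nat -> C) -> C) x : Nat.iter n (Fw_adj w) phi x = phi (Fw_iter w n x).
Proof.
  revert x; induction n; intros x; auto. simpl. unfold Fw_adj at 1. rewrite IHn.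
  f_equal. unfold Fw_iter. rewrite <- Nat.iter_succ_r. reflexivity.
Qed.

Lemma prodR_split f m n : prodR f (m + n) = prodR f m * prodR (fun k => f (m + k)%nat) n.
Proof. induction n; simpl. rewrite Nat.add_0_r; ring. rewrite Nat.add_succ_r; simpl. rewrite IHn; ring. Qed.

Fixpoint chain_indices (st : nat -> nat -> nat) (Nf : nat -> nat) (k : nat) : nat :=
  match k with O => st O O | S k' => st (chain_indices st Nf k' + Nf k')%nat (S k') end.

Lemma Cinv_RtoC r : r <> 0 -> RtoC (/ r) = Cinv (RtoC r).
Proof. intros. unfold Cinv, RtoC; simpl. f_equal; field; auto. Qed.

Lemma pow_quarter_le j k : (j <= k)%nat -> (1/4) ^ k <= (1/2) ^ j * (1/2) ^ k.
Proof.
  intros H. replace (1/4) with ((1/2) * (1/2)) by field. rewrite Rpow_mult_distr.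
  apply Rmult_le_compat_r. apply pow_le; lra.
  replace k with (j + (k - j))%nat by lia. rewrite pow_add.
  assert (forall n, 0 <= (1/2)^n <= 1) by (induction n; simpl; [lra|]; nra).
  destruct (H0 j), (H0 (k - j)%nat). nra.
Qed.

(* r_(k+1) = r_k 4^(-(k+1)) / (1 + E_(k+1) Cb^(n_k)): the later terms of φ stay negligible at
   the earlier times n_j. *)
Fixpoint scale_seq (E : nat -> R) (nfun : nat -> nat) (Cb : R) (k : nat) : R :=
  match k with O => 1 | S k' => scale_seq E nfun Cb k' * (1/4) ^ (S k') / (1 + E (S k') * Cb ^ (nfun k')) end.

Section ScaleSeq.
Context (E : nat -> R) (nf : nat -> nat) (Cb : R).
Hypotheses (HE : forall k, 0 <= E k) (HCb : 1 <= Cb).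

Lemma scale_seq_S k :
  scale_seq E nf Cb (S k) = scale_seq E nf Cb k * (1/4) ^ (S k) / (1 + E (S k) * Cb ^ (nf k)).
Proof. reflexivity. Qed.

Lemma scale_seq_pos k : 0 < scale_seq E nf Cb k.
Proof.
  induction k as [|k IH]; [simpl; lra|]. rewrite scale_seq_S.
  pose proof (HE (S k)). pose proof (pow_R1_Rle Cb (nf k) HCb).
  apply Rdiv_lt_0_compat. apply Rmult_lt_0_compat; auto. apply pow_lt; lra. nra.
Qed.

Lemma scale_seq_antitone j k : (j <= k)%nat -> scale_seq E nf Cb k <= scale_seq E nf Cb j.
Proof.
  induction 1 as [|k _ IH]; [lra|]. eapply Rle_trans; [|exact IH]. rewrite scale_seq_S.
  pose proof (HE (S k)). pose proof (pow_R1_Rle Cb (nf k) HCb). pose proof (scale_seq_pos k).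
  assert ((1/4) ^ (S k) <= 1) by (rewrite <- (pow1 (S k)) at 2; apply pow_incr; split; lra).
  pose proof (pow_le (1/4) (S k) ltac:(lra)).
  set (q := (1/4) ^ (S k)) in *. set (D := 1 + E (S k) * Cb ^ nf k).
  assert (HD : 1 <= D) by (unfold D; nra).
  apply Rmult_le_reg_r with D; [lra|]. unfold Rdiv. rewrite Rmult_assoc, Rinv_l, Rmult_1_r by lra. nra.
Qed.
End ScaleSeq.

Lemma chain_gap (nf Nf : nat -> nat) : (forall k, (nf k + Nf k <= nf (S k))%nat) ->
  forall j k, (j < k)%nat -> (nf j + Nf j <= nf k)%nat.
Proof. intros H j k Hjk. induction Hjk. auto. specialize (H m). lia. Qed.
Lemma chain_mono (nf Nf : nat -> nat) : (forall k, (nf k + Nf k <= nf (S k))%nat) ->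
  forall j k, (j <= k)%nat -> (nf j <= nf k)%nat.
Proof. intros H j k Hjk. destruct (Nat.eq_dec j k). subst; auto. pose proof (chain_gap nf Nf H j k ltac:(lia)). lia. Qed.

Section Construction.
Context (p : R) (a b w : nat -> C).
Context (Hp : 1 < p) (Ha : forall n, a n <> RtoC 0) (Hw : forall n, w n <> RtoC 0).
Context (Cb : R) (HCb : 1 <= Cb)
  (HF : forall x, inX p a b x -> inX p a b (Fw w x) /\ normX p a b (Fw w x) <= Cb * normX p a b x).

Definition wprod (m : nat) : R := prodR (fun k => Cmod (w k)) m.
Definition ratio (M : nat) : R := coord_const a b M / wprod M.
Definition coef_weight (N : nat) (c : nat -> C) : R := rsum (fun m => Cmod (c m) * Cb ^ N * wprod m) N.
Definition back_form (n N : nat) (c : nat -> C) (x : nat -> C) : C :=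
  csum (fun m => Cmult (c m) (Cdiv (x (m + n)%nat) (prodC (fun k => w (m + k)%nat) n))) N.

Lemma wprod_pos m : 0 < wprod m.
Proof. unfold wprod. apply prodR_gt0. intros k. apply Cmod_gt_0. auto. Qed.
Lemma ratio_ge0 M : 0 <= ratio M.
Proof. unfold ratio. apply Rdiv_le_0_compat. apply coord_const_ge0. apply wprod_pos. Qed.
Lemma coef_weight_ge0 N c : 0 <= coef_weight N c.
Proof.
  unfold coef_weight. apply rsum_ge0. intros i. pose proof (Cmod_ge_0 (c i)). pose proof (pow_le Cb N ltac:(lra)).
  pose proof (wprod_pos i). apply Rmult_le_pos; [apply Rmult_le_pos|]; lra.
Qed.
Lemma back_form_inv n N c x : back_form n N c (Fw_iter w n x) = fin_form N c x.
Proof.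
  unfold back_form, fin_form. apply csum_ext. intros m _. rewrite Fw_iter_high. field. apply prodC_neq0; auto.
Qed.
Lemma back_form_zero n N c n' x : (n + N <= n')%nat -> back_form n N c (Fw_iter w n' x) = RtoC 0.
Proof.
  intros H. unfold back_form. transitivity (csum (fun _ => RtoC 0) N).
  apply csum_ext. intros m Hm. rewrite Fw_iter_low by lia. unfold Cdiv; ring.
  clear. induction N; simpl; auto. rewrite IHN; ring.
Qed.
Lemma back_form_add n N c x y : back_form n N c (fun k => Cplus (x k) (y k)) = Cplus (back_form n N c x) (back_form n N c y).
Proof. unfold back_form. rewrite <- csum_plus. apply csum_ext; intros. unfold Cdiv; ring. Qed.
Lemma back_form_scal n N c z x : back_form n N c (fun k => Cmult z (x k)) = Cmult z (back_form n N c x).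
Proof. unfold back_form. rewrite <- csum_scal. apply csum_ext; intros. unfold Cdiv; ring. Qed.

Lemma Fw_iter_normX_le : forall n x, inX p a b x -> inX p a b (Fw_iter w n x) /\ normX p a b (Fw_iter w n x) <= Cb ^ n * normX p a b x.
Proof. apply (Fw_iter_bound p a b w Cb HCb HF). Qed.

Lemma coord_shift_bound x i j : inX p a b x ->
  Cmod (x i) * prodR (fun l => Cmod (w (i + l)%nat)) j <= coord_const a b (i + j) * (Cb ^ j * normX p a b x).
Proof.
  intros Hx. destruct (Fw_iter_normX_le j x Hx) as [H1 H2].
  pose proof (coord_bound p a b Hp Ha (Fw_iter w j x) (i + j) H1). rewrite Fw_iter_high in H.
  rewrite Cmod_mult, Cmod_prodC in H. rewrite Rmult_comm. eapply Rle_trans. apply H.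
  apply Rmult_le_compat_l. apply coord_const_ge0. auto.
Qed.

Lemma back_form_bound n N c x : inX p a b x -> Cmod (back_form n N c x) <= coef_weight N c * ratio (n + N) * normX p a b x.
Proof.
  intros Hx. unfold back_form, coef_weight. eapply Rle_trans. apply Cmod_csum.
  rewrite Rmult_assoc, Rmult_comm, <- rsum_scal. apply rsum_le. intros m Hm.
  rewrite Cmod_mult, Cmod_div by (apply prodC_neq0; auto). rewrite Cmod_prodC.
  set (j := (N - m)%nat).
  set (A := prodR (fun k => Cmod (w (m + k)%nat)) n).
  set (B := prodR (fun l => Cmod (w (m + n + l)%nat)) j).
  pose proof (coord_shift_bound x (m + n) j Hx) as Hs. fold B in Hs.
  assert (Ej : (m + n + j = n + N)%nat) by (unfold j; lia). rewrite Ej in Hs.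
  assert (HA : 0 < A) by (apply prodR_gt0; intros; apply Cmod_gt_0; auto).
  assert (HB : 0 < B) by (apply prodR_gt0; intros; apply Cmod_gt_0; auto).
  assert (EW : wprod (n + N) = wprod m * (A * B)).
  { unfold wprod. rewrite <- Ej. rewrite <- Nat.add_assoc, prodR_split. f_equal.
    rewrite prodR_split. unfold A, B. replace (fun l => Cmod (w (m + n + l)%nat)) with (fun k => Cmod (w (m + (n + k))%nat)). reflexivity. apply functional_extensionality; intros; rewrite Nat.add_assoc; auto. }
  pose proof (wprod_pos m). pose proof (normX_ge0 p a b x). pose proof (coord_const_ge0 a b (n + N)).
  assert (Cb ^ j <= Cb ^ N) by (apply Rle_pow; auto; unfold j; lia).
  pose proof (pow_le Cb j ltac:(lra)). pose proof (Cmod_ge_0 (c m)). pose proof (Cmod_ge_0 (x (m + n)%nat)).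
  unfold ratio. rewrite EW.
  assert (Cmod (x (m + n)%nat) / A <= coord_const a b (n + N) * (Cb ^ N * normX p a b x) / (A * B)).
  { apply Rmult_le_reg_r with (A * B). nra. unfold Rdiv. rewrite Rmult_assoc, (Rmult_assoc _ (/ (A * B))), Rinv_l by nra.
    rewrite Rmult_1_r. replace (Cmod (x (m + n)%nat) * (/ A * (A * B))) with (Cmod (x (m + n)%nat) * B) by (field; lra).
    eapply Rle_trans. apply Hs. apply Rmult_le_compat_l. auto. apply Rmult_le_compat_r; auto. }
  apply Rle_trans with (Cmod (c m) * (coord_const a b (n + N) * (Cb ^ N * normX p a b x) / (A * B))).
  apply Rmult_le_compat_l; auto. right. field. nra.
Qed.
Lemma orbit_with_targets (Nf : nat -> nat) (cf : nat -> nat -> C) (nf : nat -> nat) (rf : nat -> R)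
  (H1 : forall k, (nf k + Nf k <= nf (S k))%nat) (H2 : forall k, 0 < rf k)
  (H3 : forall j k, (j < k)%nat -> rf k * (coef_weight (Nf k) (cf k) * ratio (nf k + Nf k)) * Cb ^ (nf j) <= rf j * (1/4) ^ k) :
  exists phi, in_dual p a b phi /\ forall j x, inX p a b x ->
    Cmod (Cminus (Cmult (RtoC (/ rf j)) (phi (Fw_iter w (nf j) x))) (fin_form (Nf j) (cf j) x)) <= 4 * (1/2) ^ j * normX p a b x.
Proof.
  set (v := fun k x => Cmult (RtoC (rf k)) (back_form (nf k) (Nf k) (cf k) x)).
  set (beta := fun k => rf k * (coef_weight (Nf k) (cf k) * ratio (nf k + Nf k))).
  assert (Hb0 : forall k, 0 <= beta k).
  { intros k. unfold beta. pose proof (H2 k). pose proof (coef_weight_ge0 (Nf k) (cf k)).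
    pose proof (ratio_ge0 (nf k + Nf k)). apply Rmult_le_pos. lra. apply Rmult_le_pos; auto. }
  assert (Hv : forall k x, inX p a b x -> Cmod (v k x) <= beta k * normX p a b x).
  { intros k x Hx. unfold v, beta. rewrite Cmod_mult, Cmod_RtoC_ge0 by (apply Rlt_le, H2).
    pose proof (back_form_bound (nf k) (Nf k) (cf k) x Hx). pose proof (H2 k).
    rewrite Rmult_assoc. apply Rmult_le_compat_l; lra. }
  set (G := beta O + rf O).
  assert (HbG : forall k, beta k <= G * (1/4) ^ k).
  { intros [|k]. simpl. unfold G. pose proof (H2 O); lra.
    pose proof (H3 O (S k) ltac:(lia)). fold (beta (S k)) in H. pose proof (pow_R1_Rle Cb (nf O) HCb).
    pose proof (Hb0 (S k)). pose proof (Hb0 O). pose proof (pow_le (1/4) (S k) ltac:(lra)).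
    unfold G. nra. }
  exists (fun x => CSeries (fun k => v k x)). split.
  - apply (CSeries_dual p a b v G (1/4)); try lra.
    + intros k x y. unfold v. rewrite back_form_add. ring.
    + intros k c x. unfold v. rewrite back_form_scal. ring.
    + intros k x Hx. eapply Rle_trans. apply Hv; auto.
      pose proof (normX_ge0 p a b x). pose proof (HbG k). nra.
  - intros j x Hx. set (y := Fw_iter w (nf j) x).
    destruct (Fw_iter_normX_le (nf j) x Hx) as [Hy Hny]. fold y in Hy, Hny.
    pose proof (H2 j) as Hrj. pose proof (normX_ge0 p a b x) as Hnx.
    assert (Happ : Cmod (Cminus (CSeries (fun k => v k y)) (Cmult (RtoC (rf j)) (fin_form (Nf j) (cf j) x)))
                   <= 4 * (rf j * (1/2) ^ j * normX p a b x)).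
    { apply (CSeries_near_single (fun k => v k y) j).
      - pose proof (pow_le (1/2) j ltac:(lra)). apply Rmult_le_pos; [apply Rmult_le_pos|]; lra.
      - intros k Hk. unfold v, y. rewrite back_form_zero by (apply (chain_gap nf Nf H1); auto). ring.
      - unfold v, y. rewrite back_form_inv. reflexivity.
      - intros k Hkj. eapply Rle_trans. apply Hv; auto. pose proof (H3 j k Hkj) as H5. fold (beta k) in H5.
        pose proof (pow_quarter_le j k ltac:(lia)).
        pose proof (Hb0 k). pose proof (pow_le Cb (nf j) ltac:(lra)).
        apply Rle_trans with (beta k * (Cb ^ nf j * normX p a b x)). apply Rmult_le_compat_l; auto.
        apply Rle_trans with (rf j * (1/4)^k * normX p a b x).
        rewrite <- Rmult_assoc. apply Rmult_le_compat_r; auto.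
        replace (rf j * (1/2)^j * normX p a b x * (1/2)^k) with (rf j * ((1/2)^j * (1/2)^k) * normX p a b x) by ring.
        apply Rmult_le_compat_r; auto. apply Rmult_le_compat_l; lra. }
    replace (Cminus (Cmult (RtoC (/ rf j)) (CSeries (fun k => v k y))) (fin_form (Nf j) (cf j) x))
      with (Cmult (RtoC (/ rf j)) (Cminus (CSeries (fun k => v k y)) (Cmult (RtoC (rf j)) (fin_form (Nf j) (cf j) x)))).
    2:{ assert (RtoC (rf j) <> RtoC 0) by (intro E; injection E; lra).
        rewrite (Cinv_RtoC (rf j)) by lra. field; auto. }
    rewrite Cmod_mult, Cmod_RtoC_ge0 by (apply Rlt_le, Rinv_0_lt_compat, Hrj).
    apply Rle_trans with (/ rf j * (4 * (rf j * (1/2) ^ j * normX p a b x))).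
    apply Rmult_le_compat_l; auto. left; apply Rinv_0_lt_compat; auto.
    right. field. lra.
Qed.

Lemma scaled_orbit_dense phi (nf : nat -> nat) (rf : nat -> R) :
  (forall j x, inX p a b x -> Cmod (Cminus (Cmult (RtoC (/ rf j)) (phi (Fw_iter w (nf j) x))) (fin_form (target_len j) (target_coef j) x)) <= 4 * (1/2) ^ j * normX p a b x) ->
  forall psi, in_dual p a b psi -> forall eps, 0 < eps -> exists j,
    dual_close p a b (fun x => Cmult (RtoC (/ rf j)) (Nat.iter (nf j) (Fw_adj w) phi x)) psi eps.
Proof.
  intros Hphi psi Hpsi eps He.
  destruct (pow_lt_1_zero (1/2) ltac:(rewrite Rabs_pos_eq; lra) (eps / 16) ltac:(lra)) as [J HJ].
  destruct (targets_dense p a b Hp Ha psi (eps / 4) Hpsi ltac:(lra) J) as [j [Hj Ht]].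
  exists j. exists (eps / 2). split. lra. intros x Hx.
  rewrite Fw_adj_iter. specialize (HJ j Hj). rewrite Rabs_pos_eq in HJ by (apply pow_le; lra).
  specialize (Ht x Hx). specialize (Hphi j x Hx). unfold target in Ht.
  replace (Cminus (Cmult (RtoC (/ rf j)) (phi (Fw_iter w (nf j) x))) (psi x)) with
    (Cplus (Cminus (Cmult (RtoC (/ rf j)) (phi (Fw_iter w (nf j) x))) (fin_form (target_len j) (target_coef j) x))
           (Copp (Cminus (psi x) (fin_form (target_len j) (target_coef j) x)))) by ring.
  eapply Rle_trans. apply Cmod_triangle. rewrite Cmod_opp. pose proof (normX_ge0 p a b x). nra.
Qed.

Lemma ratio_small_time : (forall eps, 0 < eps -> forall L, exists M, (L <= M)%nat /\ ratio M < eps) ->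
  forall s k, exists n, (s <= n)%nat /\
    coef_weight (target_len k) (target_coef k) * ratio (n + target_len k) * Cb ^ s <= (1/4) ^ k.
Proof.
  intros HQ s k. set (D := coef_weight (target_len k) (target_coef k)).
  pose proof (coef_weight_ge0 (target_len k) (target_coef k)) as HD. fold D in HD.
  pose proof (pow_R1_Rle Cb s HCb). pose proof (pow_lt (1/4) k ltac:(lra)).
  destruct (HQ ((1/4) ^ k / ((D + 1) * Cb ^ s)) ltac:(apply Rdiv_lt_0_compat; nra) (s + target_len k)%nat)
    as [M [HM1 HM2]].
  exists (M - target_len k)%nat. split. lia. replace (M - target_len k + target_len k)%nat with M by lia.
  pose proof (ratio_ge0 M).
  apply Rle_trans with ((D + 1) * ratio M * Cb ^ s). apply Rmult_le_compat_r. lra. apply Rmult_le_compat_r; lra.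
  apply Rmult_lt_compat_l with (r := (D + 1) * Cb ^ s) in HM2. 2: nra.
  replace ((D + 1) * Cb ^ s * ((1 / 4) ^ k / ((D + 1) * Cb ^ s))) with ((1/4)^k) in HM2 by (field; nra). nra.
Qed.

Lemma adj_hypercyclic_of_ratio : (forall eps, 0 < eps -> forall L, exists M, (L <= M)%nat /\ ratio M < eps) -> adj_hypercyclic p a b w.
Proof.
  intros HQ. pose proof (ratio_small_time HQ) as step.
  set (st := fun s k => proj1_sig (constructive_indefinite_description _ (step s k))).
  assert (Hst : forall s k, (s <= st s k)%nat /\ coef_weight (target_len k) (target_coef k) * ratio (st s k + target_len k) * Cb ^ s <= (1/4) ^ k).
  { intros s k. unfold st. destruct (constructive_indefinite_description _ (step s k)); auto. }
  set (nf := chain_indices st target_len).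
  assert (H1 : forall k, (nf k + target_len k <= nf (S k))%nat).
  { intros k. unfold nf. simpl. apply Hst. }
  destruct (orbit_with_targets target_len target_coef nf (fun _ => 1) H1 ltac:(intros; lra)) as [phi [Hphi Horb]].
  { intros j k Hjk. destruct k as [|k']. lia.
    change (nf (S k')) with (st (nf k' + target_len k')%nat (S k')).
    destruct (Hst (nf k' + target_len k')%nat (S k')) as [_ Hs].
    assert (Cb ^ nf j <= Cb ^ (nf k' + target_len k')).
    { apply Rle_pow; auto. pose proof (chain_mono nf target_len H1 j k' ltac:(lia)). lia. }
    pose proof (coef_weight_ge0 (target_len (S k')) (target_coef (S k'))). pose proof (ratio_ge0 (st (nf k' + target_len k')%nat (S k') + target_len (S k'))).
    assert (0 <= coef_weight (target_len (S k')) (target_coef (S k')) * ratio (st (nf k' + target_len k')%nat (S k') + target_len (S k'))) by (apply Rmult_le_pos; auto).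
    rewrite !Rmult_1_l. eapply Rle_trans; [|apply Hs]. apply Rmult_le_compat_l; auto. }
  exists phi. split; auto. intros psi Hpsi eps He.
  destruct (scaled_orbit_dense phi nf (fun _ => 1) Horb psi Hpsi eps He) as [j Hj].
  exists (nf j). replace (Nat.iter (nf j) (Fw_adj w) phi) with (fun x => Cmult (RtoC (/ 1)) (Nat.iter (nf j) (Fw_adj w) phi x)); auto.
  apply functional_extensionality; intros x. rewrite Rinv_1. ring.
Qed.

Lemma adj_supercyclic_of_bounded : adj_supercyclic p a b w.
Proof.
  set (nf := chain_indices (fun s _ => s) target_len).
  assert (H1 : forall k, (nf k + target_len k <= nf (S k))%nat) by (intros; unfold nf; simpl; lia).
  set (E := fun k => coef_weight (target_len k) (target_coef k) * ratio (nf k + target_len k)).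
  assert (HE : forall k, 0 <= E k) by (intros; unfold E; apply Rmult_le_pos; [apply coef_weight_ge0|apply ratio_ge0]).
  set (rf := scale_seq E nf Cb).
  assert (H2 : forall k, 0 < rf k) by (apply scale_seq_pos; auto).
  assert (Hpow : forall n, 1 <= Cb ^ n) by (intros; apply pow_R1_Rle; auto).
  destruct (orbit_with_targets target_len target_coef nf rf H1 H2) as [phi [Hphi Horb]].
  { intros j k Hjk. destruct k as [|k']. lia. fold (E (S k')).
    unfold rf. rewrite scale_seq_S. fold rf.
    pose proof (HE (S k')). pose proof (Hpow (nf k')). pose proof (H2 k').
    pose proof (scale_seq_antitone E nf Cb HE HCb j k' ltac:(lia)) as Hanti. fold rf in Hanti.
    assert (Cb ^ nf j <= Cb ^ nf k') by (apply Rle_pow; auto; apply (chain_mono nf target_len H1); lia).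
    pose proof (pow_le (1/4) (S k') ltac:(lra)).
    assert (E (S k') * Cb ^ nf j / (1 + E (S k') * Cb ^ nf k') <= 1).
    { apply Rmult_le_reg_r with (1 + E (S k') * Cb ^ nf k'). nra. unfold Rdiv. rewrite Rmult_assoc, Rinv_l by nra. nra. }
    apply Rle_trans with (rf k' * (1/4) ^ (S k') * (E (S k') * Cb ^ nf j / (1 + E (S k') * Cb ^ nf k'))).
    right. field. nra.
    apply Rle_trans with (rf k' * (1/4) ^ (S k')). rewrite <- (Rmult_1_r (rf k' * (1/4) ^ (S k'))) at 2.
    apply Rmult_le_compat_l; auto. nra. nra. }
  exists phi. split; auto. intros psi Hpsi eps He.
  destruct (scaled_orbit_dense phi nf rf Horb psi Hpsi eps He) as [j Hj].
  exists (RtoC (/ rf j)), (nf j). auto.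
Qed.
End Construction.

Definition bratio_pow (p : R) (a b : nat -> C) (m j : nat) : R :=
  rpowp (Cmod (prodC (fun k => Cdiv (b (m + k)%nat) (a (m + k + 1)%nat)) j)) p.

Lemma rsum_term f L n : (forall i, 0 <= f i) -> (n < L)%nat -> f n <= rsum f L.
Proof.
  intros H Hn. induction L. lia. simpl. destruct (Nat.eq_dec n L). subst. pose proof (rsum_ge0 f L H). lra.
  pose proof (IHL ltac:(lia)). specialize (H L). lra.
Qed.

Lemma rpowp_pow x j q : 0 <= x -> rpowp (x ^ j) q = rpowp x q ^ j.
Proof.
  intros Hx. induction j. simpl. apply rpowp_1. simpl. rewrite rpowp_mult, IHj; auto. apply pow_le; auto.
Qed.

Lemma limsup_bound (r : nat -> R) : Rbar_lt (LimSup_seq r) (Finite 1) ->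
  exists rho N0, 0 < rho < 1 /\ forall n, (N0 <= n)%nat -> r n <= rho.
Proof.
  intros Hlt. assert (Hl : is_LimSup_seq r (LimSup_seq r)) by (unfold LimSup_seq; apply proj2_sig).
  destruct (LimSup_seq r) as [l| |]; simpl in Hlt; try tauto.
  - assert (He : 0 < (1 - l) / 2) by lra. destruct (Hl (mkposreal _ He)) as [_ [N0 HN]].
    exists (Rmax ((1 + l) / 2) (1/2)), N0. split. split. eapply Rlt_le_trans; [|apply Rmax_r]; lra.
    apply Rmax_lub_lt; lra. intros n Hn. specialize (HN n Hn). simpl in HN. eapply Rle_trans; [|apply Rmax_l]. lra.
  - destruct (Hl (1/2)) as [N0 HN]. exists (1/2), N0. split. lra. intros n Hn. specialize (HN n Hn). lra.
Qed.

Lemma rpowp_lt1 rho q : 0 < rho < 1 -> 0 < q -> rpowp rho q < 1.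
Proof.
  intros Hr Hq. rewrite rpowp_pos by lra. unfold Rpower. rewrite <- exp_0. apply exp_increasing.
  assert (ln rho < ln 1) by (apply ln_increasing; lra). rewrite ln_1 in H. nra.
Qed.

Section BRatio.
Context (p : R) (a b : nat -> C) (Hp : 1 < p).

Definition bratio (n : nat) : R := Cmod (Cdiv (b n) (a (S n))).

Lemma bratio_bounded rho N0 : 0 < rho < 1 -> (forall n, (N0 <= n)%nat -> bratio n <= rho) ->
  forall n, bratio n <= 1 + rsum bratio N0.
Proof.
  intros Hr HN n. assert (forall i, 0 <= bratio i) by (intros; apply Cmod_ge_0).
  pose proof (rsum_ge0 bratio N0 H).
  destruct (Nat.lt_ge_cases n N0). pose proof (rsum_term bratio N0 n H H1). lra. specialize (HN n H1). lra.
Qed.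

Lemma bratio_prod_bound rho N0 : 0 < rho < 1 -> (forall n, (N0 <= n)%nat -> bratio n <= rho) ->
  forall m j, prodR (fun k => bratio (m + k)%nat) j <= ((1 + rsum bratio N0) / rho) ^ N0 * rho ^ j.
Proof.
  intros Hr HN m j. set (R0 := 1 + rsum bratio N0). set (q := R0 / rho).
  assert (Hpos : forall i, 0 <= bratio i) by (intros; apply Cmod_ge_0).
  assert (HR0 : 1 <= R0) by (unfold R0; pose proof (rsum_ge0 bratio N0 Hpos); lra).
  assert (Hq : 1 <= q) by (unfold q; apply Rmult_le_reg_r with rho; [lra|]; unfold Rdiv; rewrite Rmult_assoc, Rinv_l; lra).
  assert (Hgen : forall j, prodR (fun k => bratio (m + k)%nat) j <= q ^ (Nat.min j (N0 - m)) * rho ^ j).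
  { induction j0. simpl; lra.
    change (prodR (fun k => bratio (m + k)%nat) (S j0)) with (prodR (fun k => bratio (m + k)%nat) j0 * bratio (m + j0)%nat).
    pose proof (prodR_ge0 (fun k => bratio (m + k)%nat) j0 (fun k => Hpos _)).
    pose proof (pow_le q (Nat.min j0 (N0 - m)) ltac:(lra)). pose proof (pow_le rho j0 ltac:(lra)).
    destruct (Nat.lt_ge_cases (m + j0) N0).
    - replace (Nat.min (S j0) (N0 - m)) with (S (Nat.min j0 (N0 - m))) by lia.
      pose proof (bratio_bounded rho N0 Hr HN (m + j0)). fold R0 in H3.
      assert (bratio (m + j0)%nat <= q * rho) by (replace (q * rho) with R0 by (unfold q; field; lra); lra).
      apply Rle_trans with (q ^ Nat.min j0 (N0 - m) * rho ^ j0 * (q * rho)). apply Rmult_le_compat; auto; try apply Hpos. right; simpl; ring.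
    - replace (Nat.min (S j0) (N0 - m)) with (Nat.min j0 (N0 - m)) by lia.
      pose proof (HN (m + j0)%nat H2).
      apply Rle_trans with (q ^ Nat.min j0 (N0 - m) * rho ^ j0 * rho). apply Rmult_le_compat; auto; try apply Hpos. right; simpl; ring. }
  eapply Rle_trans. apply Hgen. apply Rmult_le_compat_r. apply pow_le; lra. apply Rle_pow; auto. lia.
Qed.

Lemma bratio_series_uniform rho N0 : 0 < rho < 1 -> (forall n, (N0 <= n)%nat -> bratio n <= rho) ->
  exists U, forall m, ex_series (fun j => bratio_pow p a b m (S j)) /\ Series (fun j => bratio_pow p a b m (S j)) <= U.
Proof.
  intros Hr HN. set (K0 := ((1 + rsum bratio N0) / rho) ^ N0).
  assert (HK0 : 0 <= K0).
  { unfold K0. apply pow_le. apply Rdiv_le_0_compat; [|lra]. pose proof (rsum_ge0 bratio N0 (fun i => Cmod_ge_0 _)); lra. }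
  set (Q0 := rpowp K0 p). set (th := rpowp rho p).
  assert (Hth : th < 1) by (apply rpowp_lt1; lra). assert (Hth0 : 0 <= th) by apply rpowp_ge0.
  assert (Hb : forall m j, 0 <= bratio_pow p a b m (S j) <= Q0 * th ^ j).
  { intros m j. split. apply rpowp_ge0. unfold bratio_pow. rewrite Cmod_prodC.
    replace (fun k => Cmod (Cdiv (b (m + k)%nat) (a (m + k + 1)%nat))) with (fun k => bratio (m + k)%nat).
    2:{ apply functional_extensionality; intros k. unfold bratio. rewrite Nat.add_1_r. auto. }
    eapply Rle_trans. apply rpowp_le. lra. split. apply prodR_ge0; intros; apply Cmod_ge_0.
    apply (bratio_prod_bound rho N0 Hr HN m (S j)).
    fold K0. rewrite rpowp_mult, rpowp_pow by (first [lra | apply pow_le; lra]). fold Q0 th.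
    simpl. assert (0 <= Q0) by apply rpowp_ge0. pose proof (pow_le th j Hth0). assert (0 <= Q0 * th ^ j) by (apply Rmult_le_pos; auto). nra. }
  assert (Hg : Rabs th < 1) by (rewrite Rabs_pos_eq; lra).
  exists (Q0 / (1 - th)). intros m. assert (ex_series (fun j => bratio_pow p a b m (S j))).
  { apply (@ex_series_le R_AbsRing R_CompleteNormedModule) with (fun j => Q0 * th ^ j).
    intros n. change (norm (bratio_pow p a b m (S n))) with (Rabs (bratio_pow p a b m (S n))). rewrite Rabs_pos_eq; apply Hb.
    apply ex_geom_scal; auto. }
  split; auto. rewrite <- Series_geom_scal by auto. apply Series_le. auto. apply ex_geom_scal; auto.
Qed.

End BRatio.

Lemma Fw_iter_unit w nu n : Fw_iter w n (unit_seq nu) = fun i => Cmult (prodC (fun k => w (nu + k)%nat) n) (unit_seq (nu + n) i).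
Proof.
  apply functional_extensionality; intros i. destruct (Nat.lt_ge_cases i n).
  - rewrite Fw_iter_low by auto. unfold unit_seq. destruct (Nat.eqb_spec i (nu + n)); [lia|ring].
  - replace i with (i - n + n)%nat by lia. rewrite Fw_iter_high. unfold unit_seq.
    destruct (Nat.eqb_spec (i - n) nu), (Nat.eqb_spec (i - n + n) (nu + n)); try lia.
    subst nu. ring. ring.
Qed.

Section UnitVectors.
Context (p : R) (a b : nat -> C).
Context (Hp : 1 < p) (Ha : forall n, a n <> RtoC 0).

Lemma coefinv_unit_low c m i : (i < m)%nat -> coefinv a b (fun k => Cmult c (unit_seq m k)) i = RtoC 0.
Proof.
  induction i; intros H; simpl.
  - unfold unit_seq. destruct (Nat.eqb_spec 0 m); [lia|]. field; auto.
  - rewrite IHi by lia. unfold unit_seq. destruct (Nat.eqb_spec (S i) m); [lia|]. field; auto.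
Qed.

Lemma coefinv_unit c m j : coefinv a b (fun k => Cmult c (unit_seq m k)) (m + j)%nat =
  Cmult (Cdiv c (a m)) (prodC (fun k => Copp (Cdiv (b (m + k)%nat) (a (m + k + 1)%nat))) j).
Proof.
  induction j.
  - rewrite Nat.add_0_r. destruct m; simpl. unfold unit_seq; simpl. field; auto.
    rewrite coefinv_unit_low by lia. unfold unit_seq. rewrite Nat.eqb_refl. field; auto.
  - replace (m + S j)%nat with (S (m + j)) by lia. simpl. rewrite IHj. unfold unit_seq.
    destruct (Nat.eqb_spec (S (m + j)) m); [lia|]. replace (m + j + 1)%nat with (S (m + j)) by lia. field; auto.
Qed.

Lemma scaled_unit_inX_normX c m : c <> RtoC 0 ->
  (inX p a b (fun k => Cmult c (unit_seq m k)) <-> ex_series (fun j => bratio_pow p a b m (S j))) /\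
  (ex_series (fun j => bratio_pow p a b m (S j)) ->
    normX p a b (fun k => Cmult c (unit_seq m k)) = Cmod (Cdiv c (a m)) * rpowp (1 + Series (fun j => bratio_pow p a b m (S j))) (/ p)).
Proof.
  intros Hc. set (x := fun k => Cmult c (unit_seq m k)).
  set (f := fun i => rpowp (Cmod (coefinv a b x i)) p).
  set (A := rpowp (Cmod (Cdiv c (a m))) p).
  assert (HA : 0 < A). { apply rpowp_gt0. rewrite Cmod_div by auto. apply Rdiv_lt_0_compat; apply Cmod_gt_0; auto. }
  assert (Ef : forall j, f (m + j)%nat = A * bratio_pow p a b m j).
  { intros j. unfold f, x. rewrite coefinv_unit. rewrite Cmod_mult, rpowp_mult by apply Cmod_ge_0. fold A. f_equal.
    unfold bratio_pow. rewrite !Cmod_prodC. f_equal. f_equal. apply functional_extensionality; intros k. apply Cmod_opp. }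
  assert (Et0 : bratio_pow p a b m 0 = 1) by (unfold bratio_pow; change (prodC _ 0) with (RtoC 1); rewrite Cmod_R, Rabs_R1; apply rpowp_1).
  assert (Eser : ex_series f <-> ex_series (fun j => bratio_pow p a b m (S j))).
  { rewrite (ex_series_incr_n f m). split; intros H.
    - apply (ex_series_ext _ _ Ef) in H. apply (proj1 (ex_series_incr_1 (bratio_pow p a b m))). eapply ex_series_ext. 2: apply (@ex_series_scal_l R_AbsRing R_NormedModule (/ A) _ H).
      intros n. cbv beta. change (scal (/ A) (A * bratio_pow p a b m n)) with (/ A * (A * bratio_pow p a b m n)). rewrite <- Rmult_assoc, Rinv_l, Rmult_1_l; lra.
    - apply (proj2 (ex_series_incr_1 (bratio_pow p a b m))) in H. apply (ex_series_ext (fun j => A * bratio_pow p a b m j)). intros; symmetry; apply Ef.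
      apply (@ex_series_scal_l R_AbsRing R_NormedModule A _ H). }
  assert (Hinx : inX p a b x <-> ex_series f).
  { split. intros Hx. apply (inX_coefinv p a b Ha x Hx).
    intros H. exists (coefinv a b x). split. exact H.
    intros k. destruct k. simpl. field; auto. simpl. field; auto. }
  split. rewrite Hinx; auto.
  intros Hs. apply Eser in Hs as Hf. unfold normX, lpnorm. fold f.
  assert (Series f = A * (1 + Series (fun j => bratio_pow p a b m (S j)))).
  { rewrite (Series_incr_n_aux f m). rewrite (Series_ext _ _ Ef). rewrite Series_scal_l.
    rewrite Series_incr_1. rewrite Et0. auto. apply ex_series_incr_1; auto.
    intros k Hk. unfold f, x. rewrite coefinv_unit_low by auto. rewrite Cmod_0. apply rpowp_0. }
  rewrite H. assert (0 <= Series (fun j => bratio_pow p a b m (S j))).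
  { apply Series_ge0; auto. intros; apply rpowp_ge0. }
  rewrite rpowp_mult by lra. unfold A. rewrite rpowp_rpowp_inv by (auto using Cmod_ge_0; lra). auto.
Qed.

Lemma unit_seq_inX m : ex_series (fun j => bratio_pow p a b m (S j)) -> inX p a b (unit_seq m).
Proof.
  intros Hs. assert (H1 : RtoC 1 <> RtoC 0) by (intro E; injection E; lra).
  replace (unit_seq m) with (fun k => Cmult (RtoC 1) (unit_seq m k)).
  - apply (scaled_unit_inX_normX (RtoC 1) m H1); auto.
  - apply functional_extensionality; intros k; apply Cmult_1_l.
Qed.

Lemma Fw_iter_unit_norm w nu n : (forall k, w k <> RtoC 0) ->
  ex_series (fun j => bratio_pow p a b (nu + n) (S j)) ->
  normX p a b (Fw_iter w n (unit_seq nu)) =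
  Cmod (prodC (fun k => w (nu + k)%nat) n) / Cmod (a (nu + n)%nat) *
    rpowp (1 + Series (fun j => bratio_pow p a b (nu + n) (S j))) (/ p).
Proof.
  intros Hw Hs. rewrite Fw_iter_unit.
  assert (Hc : prodC (fun k => w (nu + k)%nat) n <> RtoC 0) by (apply prodC_neq0; auto).
  destruct (scaled_unit_inX_normX _ (nu + n) Hc) as [_ Hnorm].
  rewrite Hnorm, Cmod_div by auto. reflexivity.
Qed.
End UnitVectors.

Lemma const_one_unit_seq : const_one = unit_seq 0.
Proof. apply functional_extensionality; intros [|k]; reflexivity. Qed.

Lemma LimInf_seq_zero_small (u : nat -> R) : LimInf_seq u = Finite 0 ->
  forall eps, 0 < eps -> forall L, exists n, (L <= n)%nat /\ u n < eps.
Proof.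
  intros H eps He L. assert (Hl : is_LimInf_seq u (LimInf_seq u)) by (unfold LimInf_seq; apply proj2_sig).
  rewrite H in Hl. destruct (Hl (mkposreal eps He)) as [H1 _]. destruct (H1 L) as [n [Hn Hu]].
  exists n; split; auto. simpl in Hu. lra.
Qed.

Lemma LimInf_seq_zero_intro (u : nat -> R) : (forall n, 0 <= u n) ->
  (forall eps, 0 < eps -> forall L, exists n, (L <= n)%nat /\ u n < eps) -> LimInf_seq u = Finite 0.
Proof.
  intros H0 H. apply is_LimInf_seq_unique. intros eps. split.
  - intros L. destruct (H eps (cond_pos eps) L) as [n [Hn Hu]]. exists n. split; auto. simpl; lra.
  - exists O. intros n _. simpl. pose proof (cond_pos eps). pose proof (H0 n). lra.
Qed.

Section Orbits.
Context (p : R) (a b w : nat -> C).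
Context (Hp : 1 < p) (Ha : forall n, a n <> RtoC 0) (Hw : forall n, w n <> RtoC 0).
Context (Cb : R) (HCb : 1 <= Cb)
  (HF : forall x, inX p a b x -> inX p a b (Fw w x) /\ normX p a b (Fw w x) <= Cb * normX p a b x).

Lemma hypercyclic_orbit_unbounded : adj_hypercyclic p a b w -> forall x nu, inX p a b x -> x nu <> RtoC 0 ->
  forall K L, exists n, (L <= n)%nat /\ K < normX p a b (Fw_iter w n x).
Proof.
  intros [phi [Hphi Hd]] x nu Hx Hnu K L. destruct Hphi as [_ [_ [Cp HCp]]].
  set (S := rsum (fun n => normX p a b (Fw_iter w n x)) L).
  assert (HS : 0 <= S) by (apply rsum_ge0; intros; apply normX_ge0).
  set (K' := Rabs K + S).
  set (T := normX p a b x + (Rabs Cp + 1) * (K' + 1)).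
  set (c := Cdiv (RtoC T) (x nu)).
  set (psi := fun y : nat -> C => Cmult c (y nu)).
  assert (Hpsi : in_dual p a b psi).
  { split; [|split]. intros; unfold psi; ring. intros; unfold psi; ring.
    exists (Cmod c * coord_const a b nu). intros y Hy. unfold psi. rewrite Cmod_mult, Rmult_assoc.
    apply Rmult_le_compat_l. apply Cmod_ge_0. apply coord_bound; auto. }
  destruct (Hd psi Hpsi 1 ltac:(lra)) as [n [delta [Hdl Hclose]]].
  specialize (Hclose x Hx). rewrite Fw_adj_iter in Hclose.
  assert (Epsi : psi x = RtoC T) by (unfold psi, c; field; auto). rewrite Epsi in Hclose.
  destruct (Fw_iter_normX_le p a b w Cb HCb HF n x Hx) as [Hn _].
  pose proof (HCp _ Hn) as Hup. pose proof (normX_ge0 p a b x) as Hnx.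
  pose proof (normX_ge0 p a b (Fw_iter w n x)) as Hnn.
  assert (Cmod (RtoC T) <= Cmod (phi (Fw_iter w n x)) + normX p a b x).
  { replace (RtoC T) with (Cplus (phi (Fw_iter w n x)) (Copp (Cminus (phi (Fw_iter w n x)) (RtoC T)))) by ring.
    eapply Rle_trans. apply Cmod_triangle. rewrite Cmod_opp. nra. }
  assert (HT : 0 <= T) by (unfold T, K'; pose proof (Rabs_pos Cp); pose proof (Rabs_pos K); nra).
  rewrite Cmod_RtoC_ge0 in H by auto.
  assert (HK' : K' < normX p a b (Fw_iter w n x)).
  { apply Rnot_le_lt. intro Hle. pose proof (Rle_abs Cp). pose proof (Rabs_pos Cp).
    assert (Cp * normX p a b (Fw_iter w n x) <= Rabs Cp * K') by nra. unfold T in H. nra. }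
  exists n. split.
  - destruct (Nat.lt_ge_cases n L); auto. exfalso.
    pose proof (rsum_term (fun n => normX p a b (Fw_iter w n x)) L n ltac:(intros; apply normX_ge0) H0).
    fold S in H1. unfold K' in HK'. pose proof (Rabs_pos K). lra.
  - unfold K' in HK'. pose proof (Rle_abs K). lra.
Qed.

Lemma adj_hypercyclic_unit_orbit_unbounded : adj_hypercyclic p a b w -> inX p a b const_one ->
   forall M : R, exists n : nat,
     let t := fun j : nat =>
       rpowp (Cmod (prodC (fun k => Cdiv (b (n + k)%nat) (a (n + k + 1)%nat)) j)) p in
     ~ ex_series (fun j => t (S j)) \/
     M < prodR (fun k => Cmod (w k)) n / Cmod (a n)
           * rpowp (1 + Series (fun j => t (S j))) (/ p).
Proof.
  intros Hh H1 M. rewrite const_one_unit_seq in H1.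
  destruct (hypercyclic_orbit_unbounded Hh _ 0%nat H1) with (K := M) (L := O) as [n [_ Hn]].
  { unfold unit_seq; simpl. intro E; injection E; lra. }
  exists n. cbv zeta.
  destruct (classic (ex_series (fun j => bratio_pow p a b n (S j)))) as [Hs|Hs]; [right|left; exact Hs].
  rewrite (Fw_iter_unit_norm p a b Hp Ha w 0 n Hw Hs), Cmod_prodC in Hn. exact Hn.
Qed.

Lemma adj_hypercyclic_liminf_zero U : (forall m, ex_series (fun j => bratio_pow p a b m (S j)) /\
    Series (fun j => bratio_pow p a b m (S j)) <= U) ->
  adj_hypercyclic p a b w -> forall nu : nat,
    LimInf_seq (fun n => Cmod (Cdiv (a (nu + n)%nat) (prodC (fun k => w (nu + k)%nat) n))) = Finite 0.
Proof.
  intros HU Hh nu. apply LimInf_seq_zero_intro; [intros; apply Cmod_ge_0|]. intros eps He L.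
  assert (HU0 : 0 <= U) by (destruct (HU 0%nat) as [E1 E2]; eapply Rle_trans; [|apply E2];
    apply Series_ge0; auto; intros; apply rpowp_ge0).
  set (V := rpowp (1 + U) (/ p)). assert (HV : 0 < V) by (apply rpowp_gt0; lra).
  destruct (hypercyclic_orbit_unbounded Hh (unit_seq nu) nu) with (K := V / eps) (L := L) as [n [Hn HK]].
  { apply (unit_seq_inX p a b Hp Ha), HU. }
  { unfold unit_seq; rewrite Nat.eqb_refl; intro E; injection E; lra. }
  exists n. split; auto. destruct (HU (nu + n)%nat) as [HUe HUl].
  rewrite (Fw_iter_unit_norm p a b Hp Ha w nu n Hw HUe) in HK.
  set (P := Cmod (prodC (fun k => w (nu + k)%nat) n)) in HK.
  set (A := Cmod (a (nu + n)%nat)) in HK.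
  assert (HP0 : 0 < P) by (apply Cmod_gt_0, prodC_neq0; auto).
  assert (HA0 : 0 < A) by (apply Cmod_gt_0; auto).
  assert (rpowp (1 + Series (fun j => bratio_pow p a b (nu + n) (S j))) (/ p) <= V).
  { apply rpowp_le. left; apply Rinv_0_lt_compat; lra. split; [|lra].
    assert (0 <= Series (fun j => bratio_pow p a b (nu + n) (S j))) by (apply Series_ge0; auto; intros; apply rpowp_ge0). lra. }
  assert (V / eps < P / A * V).
  { eapply Rlt_le_trans. apply HK. apply Rmult_le_compat_l; auto. apply Rlt_le, Rdiv_lt_0_compat; auto. }
  assert (Hratio : 1 / eps < P / A).
  { apply Rmult_lt_reg_r with V; auto. replace (1 / eps * V) with (V / eps) by (field; lra). lra. }
  rewrite Cmod_div by (try apply prodC_neq0; auto). fold A P.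
  apply Rmult_lt_reg_r with (P / A). apply Rdiv_lt_0_compat; auto.
  replace (A / P * (P / A)) with 1 by (field; lra).
  apply Rmult_lt_compat_l with (r := eps) in Hratio; auto.
  replace (eps * (1 / eps)) with 1 in Hratio by (field; lra). lra.
Qed.

(* Since |b_(M-1)| <= R0 |a_M|, the ratio governing the orbit is at most (1 + R0) |a_M| / |w_0 ... w_(M-1)|. *)
Lemma ratio_small_of_liminf R0 : (forall n, bratio a b n <= R0) ->
  LimInf_seq (fun n => Cmod (Cdiv (a n) (prodC w n))) = Finite 0 ->
  forall eps, 0 < eps -> forall L, exists M, (L <= M)%nat /\ ratio a b w M < eps.
Proof.
  intros HR Hl eps He L.
  assert (HR0 : 0 < 1 + R0) by (pose proof (HR 0%nat); pose proof (Cmod_ge_0 (Cdiv (b 0%nat) (a 1%nat))); unfold bratio in *; lra).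
  destruct (LimInf_seq_zero_small _ Hl (eps / (1 + R0)) ltac:(apply Rdiv_lt_0_compat; lra) (S L)) as [[|n'] [Hn Hu]]; [lia|].
  exists (S n'). split. lia.
  unfold ratio, coord_const, wprod. simpl (S n' - 1)%nat. rewrite Nat.sub_0_r.
  rewrite Cmod_div, Cmod_prodC in Hu by (apply prodC_neq0; auto).
  set (W := prodR (fun k => Cmod (w k)) (S n')) in *.
  assert (HW : 0 < W) by (apply prodR_gt0; intros; apply Cmod_gt_0; auto).
  pose proof (HR n') as Hb. unfold bratio in Hb. rewrite Cmod_div in Hb by auto.
  assert (HA0 : 0 < Cmod (a (S n'))) by (apply Cmod_gt_0; auto).
  assert (Cmod (b n') <= R0 * Cmod (a (S n'))).
  { apply Rmult_le_compat_r with (r := Cmod (a (S n'))) in Hb; [|lra].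
    unfold Rdiv in Hb. rewrite Rmult_assoc, Rinv_l, Rmult_1_r in Hb by lra. auto. }
  apply Rle_lt_trans with ((1 + R0) * (Cmod (a (S n')) / W)).
  unfold Rdiv. rewrite <- Rmult_assoc. apply Rmult_le_compat_r. left; apply Rinv_0_lt_compat; auto. lra.
  apply Rmult_lt_compat_l with (r := 1 + R0) in Hu; auto.
  replace ((1 + R0) * (eps / (1 + R0))) with eps in Hu by (field; lra). auto.
Qed.
End Orbits.

Theorem mainTheorem4 (p : R) (a b w : nat -> C) :
  1 < p ->
  (forall n, a n <> RtoC 0) -> (forall n, b n <> RtoC 0) ->
  (* limsup (|a_n| + |b_n|)^(1/n) < oo *)
  (exists C0 M : R, forall n, Cmod (a n) + Cmod (b n) <= C0 * M ^ n) ->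
  (forall n, w n <> RtoC 0) ->
  Fw_bounded p a b w ->
  (* (i) *)
  ((forall nu : nat,
      LimInf_seq (fun n => (Cmod (a (nu + n)%nat) + Cmod (b (nu + n - 1)%nat))
                           / prodR (fun k => Cmod (w (nu + k)%nat)) n) = Finite 0) ->
   adj_hypercyclic p a b w)
  /\
  (* (ii) *)
  (adj_hypercyclic p a b w -> inX p a b const_one ->
   forall M : R, exists n : nat,
     let t := fun j : nat =>
       rpowp (Cmod (prodC (fun k => Cdiv (b (n + k)%nat) (a (n + k + 1)%nat)) j)) p in
     ~ ex_series (fun j => t (S j)) \/
     M < prodR (fun k => Cmod (w k)) n / Cmod (a n)
           * rpowp (1 + Series (fun j => t (S j))) (/ p))
  /\
  (* (iii) *)
  adj_supercyclic p a b w
  /\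
  (* (iv) *)
  ((exists M : R, forall n, Cmod (Cdiv (Cmult (w n) (a n)) (a (S n))) <= M) ->
   Rbar_lt (LimSup_seq (fun n => Cmod (Cdiv (b n) (a (S n))))) (Finite 1) ->
   (adj_hypercyclic p a b w <->
    forall nu : nat,
      LimInf_seq (fun n => Cmod (Cdiv (a (nu + n)%nat)
                                       (prodC (fun k => w (nu + k)%nat) n))) = Finite 0)).
Proof.
  intros Hp Ha _ _ Hw Hbd.
  destruct (Fw_bounded_const p a b w Hbd) as [Cb [HCb HF]].
  split; [|split; [|split]].
  - intros Hi. apply (adj_hypercyclic_of_ratio p a b w Hp Ha Hw Cb HCb HF).
    exact (LimInf_seq_zero_small _ (Hi 0%nat)).
  - exact (adj_hypercyclic_unit_orbit_unbounded p a b w Hp Ha Hw Cb HCb HF).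
  - exact (adj_supercyclic_of_bounded p a b w Hp Ha Hw Cb HCb HF).
  - intros _ Hls.
    destruct (limsup_bound (bratio a b) Hls) as [rho [N0 [Hrho HN]]].
    destruct (bratio_series_uniform p a b Hp rho N0 Hrho HN) as [U HU]. split.
    + exact (adj_hypercyclic_liminf_zero p a b w Hp Ha Hw Cb HCb HF U HU).
    + intros Hl. apply (adj_hypercyclic_of_ratio p a b w Hp Ha Hw Cb HCb HF).
      exact (ratio_small_of_liminf a b w Ha Hw _ (bratio_bounded a b rho N0 Hrho HN) (Hl 0%nat)).
Qed.
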